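(* For every integer $N\ge1$ there exist $\delta_0>0$ and $C>0$, depending only on $N$, such that the following holds. Let $U_\varphi,V_\varphi\subset\mathbb R^2$ be open with $\overline B_\infty(0,1)=\{\max(|x_1|,|x_2|)\le1\}\subset U_\varphi\cap V_\varphi$, and let $\varphi:U_\varphi\to V_\varphi$ be a $C^{N+1}$ diffeomorphism onto its image with $\varphi(0)=0$, $d\varphi(0)=\mathrm{diag}(2,1/2)$, and $\sup_{U_\varphi}|\partial^\alpha\varphi|\le\delta$ for $2\le|\alpha|\le N+1$, where $0<\delta\le\delta_0$. Let $1\le k\le N$ and let $F\in C^k([-1,1];\mathbb R)$ satisfy $F(0)=0$ and $\|F\|_{C^k}\le1$. Then $$\|\Phi_uF\|_{C^k}\le \tfrac14\|F\|_{C^k}+C\delta.$$ If additionally $\|F\|_{C^{k,1}}\le 1$, then $$\|\Phi_uF\|_{C^{k,1}}\le\tfrac14\|F\|_{C^{k,1}}+C\delta.$$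
   Context: For $H:[-1,1]\to\mathbb R$ let $\mathcal G_u(H):=\{(x_1,x_2):|x_1|\le1,\ x_2=H(x_1)\}$. For $F$ with $F(0)=0$ and $\sup|F'|\le1$, $\Phi_uF:[-1,1]\to\mathbb R$ denotes the (unique) function with $\varphi(\mathcal G_u(F))\cap\{|x_1|\le1\}=\mathcal G_u(\Phi_uF)$ (the graph transform). Seminorms: $\|F\|_{C^k}:=\max_{1\le j\le k}\sup_{[-1,1]}|\partial_{x_1}^jF|$, and $\|F\|_{C^{k,1}}:=\max\big(\|F\|_{C^k},\ \sup_{x_1\ne\tilde x_1}\frac{|\partial^k_{x_1}F(x_1)-\partial^k_{x_1}F(\tilde x_1)|}{|x_1-\tilde x_1|}\big)$. *)

From Stdlib Require Import Reals List.
From Coquelicot Require Import Coquelicot.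
Open Scope R_scope.

Definition I11 (x : R) : Prop := -1 <= x <= 1.

Definition Binf1 (p : R * R) : Prop := Rabs (fst p) <= 1 /\ Rabs (snd p) <= 1.

Definition pd1 (g : R * R -> R) (p : R * R) : R :=
  Derive (fun t => g (t, snd p)) (fst p).
Definition pd2 (g : R * R -> R) (p : R * R) : R :=
  Derive (fun t => g (fst p, t)) (snd p).

(** Iterated partial derivative along a word of directions
    (false = d/dx1, true = d/dx2); the head of the list is applied last. *)
Fixpoint pdw (w : list bool) (g : R * R -> R) : R * R -> R :=
  match w with
  | nil => g
  | b :: w' => if b then pd2 (pdw w' g) else pd1 (pdw w' g)
  end.

Definition Cm_on (m : nat) (U : R * R -> Prop) (g : R * R -> R) : Prop :=
  (forall w : list bool, (length w < m)%nat -> forall p, U p ->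
     ex_derive (fun t => pdw w g (t, snd p)) (fst p) /\
     ex_derive (fun t => pdw w g (fst p, t)) (snd p)) /\
  (forall w : list bool, (length w <= m)%nat -> forall p, U p ->
     continuous (pdw w g) p).

Definition Cm_on2 (m : nat) (U : R * R -> Prop) (f : R * R -> R * R) : Prop :=
  Cm_on m U (fun p => fst (f p)) /\ Cm_on m U (fun p => snd (f p)).

Definition image2 (f : R * R -> R * R) (U : R * R -> Prop) (q : R * R) : Prop :=
  exists p, U p /\ q = f p.

Definition Cm_diffeo_onto_image (m : nat) (U V : R * R -> Prop)
    (f : R * R -> R * R) : Prop :=
  (forall p, U p -> V (f p)) /\
  Cm_on2 m U f /\
  exists g : R * R -> R * R,
    (forall p, U p -> g (f p) = p) /\
    (forall q, image2 f U q -> f (g q) = q) /\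
    Cm_on2 m (image2 f U) g.

(** One-variable calculus on the closed interval [-1,1]
    (one-sided at the endpoints). *)
Definition is_deriv_I (f f' : R -> R) (x : R) : Prop :=
  filterlim (fun h => (f (x + h) - f x) / h)
    (within (fun h => h <> 0 /\ I11 (x + h)) (locally 0)) (locally (f' x)).

Definition cont_I (f : R -> R) (x : R) : Prop :=
  filterlim f (within I11 (locally x)) (locally (f x)).

(** [Fd] is the list of derivatives of F on [-1,1] up to order k, and
    F is C^k([-1,1]): Fd 0 = F, Fd (j+1) = (Fd j)' on [-1,1] for j < k,
    and Fd j is continuous on [-1,1] for j <= k.  (Derivatives on [-1,1]
    are unique, so Fd j is determined on [-1,1] by F.) *)
Definition Ck_I (k : nat) (F : R -> R) (Fd : nat -> R -> R) : Prop :=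
  (forall x, I11 x -> Fd O x = F x) /\
  (forall j, (j < k)%nat -> forall x, I11 x -> is_deriv_I (Fd j) (Fd (S j)) x) /\
  (forall j, (j <= k)%nat -> forall x, I11 x -> cont_I (Fd j) x).

Definition Ck_norm (k : nat) (Fd : nat -> R -> R) : Rbar :=
  Lub_Rbar (fun y => exists j x, (1 <= j <= k)%nat /\ I11 x /\
                                y = Rabs (Fd j x)).

Definition Ck1_norm (k : nat) (Fd : nat -> R -> R) : Rbar :=
  Lub_Rbar (fun y => (exists j x, (1 <= j <= k)%nat /\ I11 x /\
                                  y = Rabs (Fd j x)) \/
                     (exists x x', I11 x /\ I11 x' /\ x <> x' /\
                        y = Rabs (Fd k x - Fd k x') / Rabs (x - x'))).

(** Graph transform relation:
    phi(G_u(F)) /\ {|x1| <= 1} = G_u(G). *)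
Definition graph_transform (phi : R * R -> R * R) (F G : R -> R) : Prop :=
  forall y : R * R,
    (Rabs (fst y) <= 1 /\ exists x1, Rabs x1 <= 1 /\ phi (x1, F x1) = y) <->
    (Rabs (fst y) <= 1 /\ snd y = G (fst y)).

(* Write h(x) = phi_1(x, F x) and a(x) = phi_2(x, F x).  As d phi(0) = diag(2, 1/2) and the
   higher derivatives of phi are O(delta), h' = 2 + O(delta) on (-1,1), so h is invertible and
   Phi_u F = a o h^-1.  Differentiating, (Phi_u F)^(j+1) = g_j o h^-1 with g_0 = a'/h' and
   g_(j+1) = g_j'/h'.  By induction on j, g_j = 2^-(j+2) F^(j+1) + eta_j where eta_j and its
   derivatives up to order k-1-j (and, for the C^{k,1} bound, the Lipschitz constant of the top
   one) are O(delta); the class [Cbounded] tracks exactly these bounds.  Since 2^-(j+2) <= 1/4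
   and h^-1 is a contraction, both estimates follow. *)

From Stdlib Require Import Reals List Lra Lia ClassicalEpsilon.
From Coquelicot Require Import Coquelicot.
Open Scope R_scope.

Lemma is_derive_eq (f : R -> R) (x l l' : R) : is_derive f x l -> l = l' -> is_derive f x l'.
Proof. intros H <-; exact H. Qed.

Lemma is_derive_Rplus (f g : R -> R) x df dg : is_derive f x df -> is_derive g x dg ->
  is_derive (fun t => f t + g t) x (df + dg).
Proof. intros; apply (is_derive_plus f g); auto. Qed.

Lemma is_derive_Rmult (f g : R -> R) x df dg : is_derive f x df -> is_derive g x dg ->
  is_derive (fun t => f t * g t) x (df * g x + f x * dg).
Proof. intros; apply (is_derive_mult f g); auto. intros; apply Rmult_comm. Qed.

Lemma is_derive_Rscal (f : R -> R) c x df : is_derive f x df ->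
  is_derive (fun t => c * f t) x (c * df).
Proof. intros; apply is_derive_scal; auto. Qed.

Lemma is_derive_Rcomp (f g : R -> R) x df dg : is_derive f (g x) df -> is_derive g x dg ->
  is_derive (fun t => f (g t)) x (df * dg).
Proof. intros. rewrite Rmult_comm. apply (is_derive_comp f g); auto. Qed.

Lemma is_derive_Rinv (f : R -> R) x df : is_derive f x df -> f x <> 0 ->
  is_derive (fun t => / f t) x (- df / (f x * f x)).
Proof.
  intros H H0. eapply is_derive_eq. apply (is_derive_inv f x df H H0).
  simpl. field. auto.
Qed.

Lemma is_derive_continuous (f : R -> R) x l : is_derive f x l -> continuous f x.
Proof. intros H. apply (ex_derive_continuous f x). exists l; exact H. Qed.

Lemma ball_Rabs (x e y : R) : ball x e y <-> Rabs (y - x) < e.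
Proof. reflexivity. Qed.

Lemma is_derive_increment (f : R -> R) x l eps : is_derive f x l -> 0 < eps ->
  exists rho, 0 < rho /\
  forall z, Rabs (z - x) < rho -> Rabs (f z - f x - l * (z - x)) <= eps * Rabs (z - x).
Proof.
  intros Hd He. destruct (proj1 (is_derive_Reals f x l) Hd eps He) as [rho Hrho].
  exists rho. split; [apply cond_pos|]. intros z Hz.
  destruct (Req_dec z x) as [->|Hzx].
  { unfold Rminus. rewrite !Rplus_opp_r, Rmult_0_r, Rplus_opp_r, Rabs_R0. lra. }
  assert (Hh : z - x <> 0) by lra.
  specialize (Hrho (z - x) Hh Hz). replace (x + (z - x)) with z in Hrho by ring.
  replace (f z - f x - l * (z - x)) with (((f z - f x) / (z - x) - l) * (z - x))
    by (field; exact Hh).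
  rewrite Rabs_mult. apply Rmult_le_compat_r; [apply Rabs_pos | lra].
Qed.

Lemma is_derive_of_increment (f : R -> R) x l :
  (forall eps, 0 < eps -> exists rho, 0 < rho /\
     forall z, Rabs (z - x) < rho -> Rabs (f z - f x - l * (z - x)) <= eps * Rabs (z - x)) ->
  is_derive f x l.
Proof.
  intros H. apply is_derive_Reals. intros eps He.
  destruct (H (eps / 2) ltac:(lra)) as [rho [Hrho Hz]].
  exists (mkposreal rho Hrho). simpl. intros h Hh0 Hh.
  assert (Hpos : 0 < Rabs h) by (apply Rabs_pos_lt; exact Hh0).
  specialize (Hz (x + h)). replace (x + h - x) with h in Hz by ring.
  specialize (Hz Hh).
  replace ((f (x + h) - f x) / h - l) with ((f (x + h) - f x - l * h) / h) by (field; exact Hh0).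
  unfold Rdiv. rewrite Rabs_mult, Rabs_inv.
  apply Rle_lt_trans with (eps / 2 * Rabs h * / Rabs h).
  - apply Rmult_le_compat_r; [left; apply Rinv_0_lt_compat|]; lra.
  - field_simplify; lra.
Qed.

Lemma increment_bound (f df : R -> R) a b c M :
  (forall s, Rmin a b <= s <= Rmax a b -> is_derive f s (df s)) ->
  (forall s, Rmin a b <= s <= Rmax a b -> Rabs (df s - c) <= M) ->
  Rabs (f b - f a - c * (b - a)) <= M * Rabs (b - a).
Proof.
  intros Hd HM.
  assert (Hd' : forall s, Rmin a b <= s <= Rmax a b ->
            is_derive (fun s => f s + - c * s) s (df s - c)).
  { intros s Hs. eapply is_derive_eq.
    - apply is_derive_Rplus; [apply Hd, Hs | apply is_derive_Rscal, (is_derive_id s)].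
    - change one with 1. ring. }
  destruct (MVT_gen (fun s => f s + - c * s) a b (fun s => df s - c)) as [t [Ht E]].
  - intros s Hs. apply Hd'. lra.
  - intros s Hs. apply continuity_pt_filterlim.
    apply (is_derive_continuous (fun s => f s + - c * s) s (df s - c)), Hd'. exact Hs.
  - replace (f b - f a - c * (b - a)) with (f b + - c * b - (f a + - c * a)) by ring.
    rewrite E, Rabs_mult. apply Rmult_le_compat_r; [apply Rabs_pos | apply HM, Ht].
Qed.

Lemma abs_increment_le (f df : R -> R) a b M :
  (forall s, Rmin a b <= s <= Rmax a b -> is_derive f s (df s)) ->
  (forall s, Rmin a b <= s <= Rmax a b -> Rabs (df s) <= M) ->
  Rabs (f b - f a) <= M * Rabs (b - a).
Proof.
  intros Hd HM. replace (f b - f a) with (f b - f a - 0 * (b - a)) by ring.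
  apply (increment_bound f df); auto. intros s Hs. rewrite Rminus_0_r. auto.
Qed.

Lemma continuous2_box (f : R * R -> R) p eps : continuous f p -> 0 < eps ->
  exists rho, 0 < rho /\ forall q, Rabs (fst q - fst p) < rho -> Rabs (snd q - snd p) < rho ->
  Rabs (f q - f p) < eps.
Proof.
  intros Hc He. destruct (Hc (ball (f p) eps)) as [rho Hr].
  - exists (mkposreal eps He). auto.
  - exists rho. split; [apply cond_pos|]. intros q H1 H2. apply Hr. split; assumption.
Qed.

Lemma differentiable_of_partials (g : R * R -> R) a b :
  locally_2d (fun x y => ex_derive (fun t => g (t, y)) x) a b ->
  ex_derive (fun t => g (a, t)) b ->
  continuous (pd1 g) (a, b) ->
  differentiable_pt_lim (fun x y => g (x, y)) a b (pd1 g (a, b)) (pd2 g (a, b)).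
Proof.
  intros [d Hd] Hb Hc eps. pose proof (cond_pos eps) as He.
  destruct (continuous2_box (pd1 g) (a, b) (eps / 2) Hc ltac:(lra)) as [r1 [Hr1 H1]].
  destruct (is_derive_increment _ _ _ (eps / 2) (Derive_correct _ _ Hb) ltac:(lra))
    as [r2 [Hr2 H2]].
  assert (Hm : 0 < Rmin d (Rmin r1 r2))
    by (apply Rmin_glb_lt; [apply cond_pos | apply Rmin_glb_lt; assumption]).
  exists (mkposreal _ Hm). simpl. intros u v Hu Hv.
  pose proof (Rmin_l d (Rmin r1 r2)). pose proof (Rmin_r d (Rmin r1 r2)).
  pose proof (Rmin_l r1 r2). pose proof (Rmin_r r1 r2).
  assert (Hs : forall s, Rmin a u <= s <= Rmax a u -> Rabs (s - a) <= Rabs (u - a)).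
  { intros s Hs. apply Rabs_le_between_min_max. rewrite Rmin_comm, Rmax_comm. exact Hs. }
  assert (A1 : Rabs (g (u, v) - g (a, v) - pd1 g (a, b) * (u - a)) <= eps / 2 * Rabs (u - a)).
  { apply (increment_bound (fun s => g (s, v)) (fun s => pd1 g (s, v))).
    - intros s Hs'. apply Derive_correct, Hd; [pose proof (Hs s Hs')|]; lra.
    - intros s Hs'. left. apply (H1 (s, v)); simpl; pose proof (Hs s Hs'); lra. }
  assert (A2 : Rabs (g (a, v) - g (a, b) - pd2 g (a, b) * (v - b)) <= eps / 2 * Rabs (v - b))
    by (apply H2; lra).
  replace (g (u, v) - g (a, b) - (pd1 g (a, b) * (u - a) + pd2 g (a, b) * (v - b)))
    with ((g (u, v) - g (a, v) - pd1 g (a, b) * (u - a))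
          + (g (a, v) - g (a, b) - pd2 g (a, b) * (v - b))) by ring.
  eapply Rle_trans; [apply Rabs_triang|].
  pose proof (Rmax_l (Rabs (u - a)) (Rabs (v - b))).
  pose proof (Rmax_r (Rabs (u - a)) (Rabs (v - b))). nra.
Qed.

Lemma is_derive_comp2 (g : R * R -> R) (u v : R -> R) t0 lx ly du dv :
  differentiable_pt_lim (fun x y => g (x, y)) (u t0) (v t0) lx ly ->
  is_derive u t0 du -> is_derive v t0 dv ->
  is_derive (fun t => g (u t, v t)) t0 (lx * du + ly * dv).
Proof.
  intros Hg Hu Hv. apply is_derive_Reals.
  apply (derivable_pt_lim_comp_2d (fun x y => g (x, y))); [exact Hg | apply is_derive_Reals..];
    assumption.
Qed.

Lemma is_derive_inverse (h X : R -> R) y0 l m : 0 < m -> l <> 0 ->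
  locally y0 (fun y => h (X y) = y) ->
  locally y0 (fun y => m * Rabs (X y - X y0) <= Rabs (y - y0)) ->
  is_derive h (X y0) l -> is_derive X y0 (/ l).
Proof.
  intros Hm Hl [d1 Hinv] [d2 Hlip] Hh. apply is_derive_of_increment. intros eps He.
  assert (Hal : 0 < Rabs l) by (apply Rabs_pos_lt; exact Hl).
  destruct (is_derive_increment h (X y0) l (eps * m * Rabs l) Hh
              ltac:(apply Rmult_lt_0_compat; nra))
    as [rho [Hrho Hinc]].
  assert (Hr : 0 < Rmin (Rmin d1 d2) (m * rho)).
  { apply Rmin_glb_lt; [apply Rmin_glb_lt; apply cond_pos | nra]. }
  exists (Rmin (Rmin d1 d2) (m * rho)). split; [exact Hr|]. intros y Hy.
  pose proof (Rmin_l (Rmin d1 d2) (m * rho)). pose proof (Rmin_r (Rmin d1 d2) (m * rho)).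
  pose proof (Rmin_l d1 d2). pose proof (Rmin_r d1 d2).
  assert (E0 : h (X y0) = y0) by (apply Hinv, ball_center).
  assert (E : h (X y) = y) by (apply Hinv, ball_Rabs; lra).
  assert (HX : m * Rabs (X y - X y0) <= Rabs (y - y0)) by (apply Hlip, ball_Rabs; lra).
  specialize (Hinc (X y) ltac:(nra)). rewrite E, E0 in Hinc.
  replace (X y - X y0 - / l * (y - y0)) with (- / l * (y - y0 - l * (X y - X y0)))
    by (field; exact Hl).
  rewrite Rabs_mult, Rabs_Ropp, Rabs_inv.
  apply Rle_trans with (/ Rabs l * (Rabs l * eps * Rabs (y - y0))).
  - apply Rmult_le_compat_l; [left; apply Rinv_0_lt_compat; exact Hal|].
    eapply Rle_trans; [exact Hinc|].
    replace (eps * m * Rabs l * Rabs (X y - X y0))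
      with (Rabs l * eps * (m * Rabs (X y - X y0))) by ring.
    apply Rmult_le_compat_l; [nra | exact HX].
  - right. field. lra.
Qed.

Definition Iopen (x : R) : Prop := -1 < x < 1.

Lemma Iopen_0 : Iopen 0.
Proof. unfold Iopen; lra. Qed.

Lemma Iopen_I11 x : Iopen x -> I11 x.
Proof. unfold Iopen, I11; lra. Qed.

Lemma Iopen_abs x : Iopen x -> Rabs x < 1.
Proof. unfold Iopen; intros; apply Rabs_def1; lra. Qed.

Lemma I11_abs_lt y : I11 y -> Rabs y < 3 / 2.
Proof. unfold I11; intros; apply Rabs_def1; lra. Qed.

Lemma Iopen_between a b s : Iopen a -> Iopen b -> Rmin a b <= s <= Rmax a b -> Iopen s.
Proof. unfold Iopen; intros Ha Hb Hs. unfold Rmin, Rmax in Hs. destruct (Rle_dec a b); lra. Qed.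

Lemma locally_Iopen x : Iopen x -> locally x Iopen.
Proof.
  intros Hx. unfold Iopen in Hx.
  assert (Hp : 0 < Rmin (1 - x) (1 + x)) by (apply Rmin_glb_lt; lra).
  exists (mkposreal _ Hp). intros y Hy.
  assert (Hy' : Rabs (y - x) < Rmin (1 - x) (1 + x)) by exact Hy. apply Rabs_def2 in Hy'.
  pose proof (Rmin_l (1 - x) (1 + x)). pose proof (Rmin_r (1 - x) (1 + x)).
  unfold Iopen; lra.
Qed.

Lemma locally_of_within (x : R) (D P : R -> Prop) :
  locally x D -> within D (locally x) P -> locally x P.
Proof. intros HD HP. generalize (filter_and _ _ HD HP). apply filter_imp. tauto. Qed.

Lemma is_derive_of_is_deriv_I f f' x : Iopen x -> is_deriv_I f f' x -> is_derive f x (f' x).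
Proof.
  intros Hx H. apply is_derive_Reals. intros eps Heps.
  assert (HD : locally 0 (fun h => I11 (x + h))).
  { destruct (locally_Iopen x Hx) as [d Hd]. exists d. intros h Hh.
    apply Iopen_I11, Hd, ball_Rabs. apply ball_Rabs in Hh.
    replace (x + h - x) with (h - 0) by ring. exact Hh. }
  assert (HP := H (ball (f' x) eps) (locally_ball _ (mkposreal eps Heps))).
  destruct (locally_of_within 0 (fun h => I11 (x + h))
              (fun h => h <> 0 -> ball (f' x) eps ((f (x + h) - f x) / h)) HD)
    as [d Hd].
  { unfold within, filtermap in HP |- *. revert HP. apply filter_imp.
    intros h Hh HI Hh0. apply Hh. tauto. }
  exists d. intros h Hh0 Hh. apply Hd; [|exact Hh0].
  change (Rabs (h - 0) < d). rewrite Rminus_0_r. exact Hh.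
Qed.

Lemma is_deriv_I_of_is_derive f f' x : is_derive f x (f' x) -> is_deriv_I f f' x.
Proof.
  intros H. apply is_derive_Reals in H. intros P [eps HP].
  destruct (H eps (cond_pos eps)) as [d Hd].
  exists d. intros h Hh [Hh0 _]. apply HP, Hd; [exact Hh0|].
  change (Rabs (h - 0) < d) in Hh. rewrite Rminus_0_r in Hh. exact Hh.
Qed.

Lemma cont_I_of_continuous f x : continuous f x -> cont_I f x.
Proof.
  intros H P HP. unfold filtermap, within. eapply filter_imp; [|exact (H P HP)]. auto.
Qed.

Lemma continuous_of_cont_I f x : Iopen x -> cont_I f x -> continuous f x.
Proof.
  intros Hx H P HP. apply (locally_of_within x I11).
  - eapply filter_imp; [apply Iopen_I11 | apply locally_Iopen, Hx].
  - exact (H P HP).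
Qed.

Lemma bound_of_cont_I f x B : I11 x -> cont_I f x ->
  (forall y, Iopen y -> Rabs (f y) <= B) -> Rabs (f x) <= B.
Proof.
  intros Hx Hc HB. apply Rnot_lt_le. intros Hlt.
  set (eps := Rabs (f x) - B).
  destruct (Hc (ball (f x) eps) (locally_ball _ (mkposreal eps ltac:(unfold eps; lra))))
    as [d Hd].
  pose proof (Rmin_l d 1). pose proof (Rmin_r d 1).
  assert (Hm : 0 < Rmin d 1) by (apply Rmin_glb_lt; [apply cond_pos | lra]).
  set (m := Rmin d 1) in *.
  set (y := x * (1 - m / 2)).
  assert (Hax : Rabs x <= 1) by (apply Rabs_le; exact Hx).
  assert (Hy : Iopen y).
  { assert (Rabs y <= 1 - m / 2).
    { unfold y. rewrite Rabs_mult, (Rabs_pos_eq (1 - m / 2)) by lra.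
      pose proof (Rabs_pos x). nra. }
    apply Rabs_le_between in H1. unfold Iopen; lra. }
  assert (Hyx : Rabs (y - x) < d).
  { unfold y. replace (x * (1 - m / 2) - x) with (x * - (m / 2)) by ring.
    rewrite Rabs_mult, Rabs_Ropp, (Rabs_pos_eq (m / 2)) by lra.
    pose proof (Rabs_pos x). nra. }
  assert (Hb : Rabs (f y - f x) < eps) by exact (Hd y Hyx (Iopen_I11 _ Hy)).
  pose proof (HB y Hy). pose proof (Rabs_triang_inv (f x) (f y)).
  rewrite <- Rabs_Ropp in Hb. replace (- (f y - f x)) with (f x - f y) in Hb by ring.
  unfold eps in Hb. lra.
Qed.

Lemma lipschitz_of_quotient (f : R -> R) M x x' :
  (x <> x' -> Rabs (f x - f x') / Rabs (x - x') <= M) -> 0 <= M ->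
  Rabs (f x - f x') <= M * Rabs (x - x').
Proof.
  intros H HM. destruct (Req_dec x x') as [<-|E].
  - rewrite !Rminus_diag, Rabs_R0. lra.
  - apply Rle_div_l; [apply Rabs_pos_lt; lra | exact (H E)].
Qed.

Definition bounded_on (A : R) (u : R -> R) := forall x, Iopen x -> Rabs (u x) <= A.
Definition continuous_on (u : R -> R) := forall x, Iopen x -> continuous u x.
Definition lipschitz_on (A : R) (u : R -> R) :=
  forall x y, Iopen x -> Iopen y -> Rabs (u x - u y) <= A * Rabs (x - y).
Definition derive_on (u u' : R -> R) := forall x, Iopen x -> is_derive u x (u' x).

(* One constant A bounds u, u', ..., u^(r) on (-1,1); [lip = true] also makes u^(r)
   A-Lipschitz. *)
Fixpoint Cbounded (lip : bool) (r : nat) (A : R) (u : R -> R) : Prop :=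
  match r with
  | O => bounded_on A u /\ continuous_on u /\ (lip = true -> lipschitz_on A u)
  | S r' => bounded_on A u /\ continuous_on u /\ exists u', derive_on u u' /\ Cbounded lip r' A u'
  end.

Section Cbounded_theory.
Variable lip : bool.

Lemma Cbounded_bounded r A u : Cbounded lip r A u -> bounded_on A u.
Proof. destruct r; simpl; tauto. Qed.

Lemma Cbounded_continuous r A u : Cbounded lip r A u -> continuous_on u.
Proof. destruct r; simpl; tauto. Qed.

Lemma Cbounded_nonneg r A u : Cbounded lip r A u -> 0 <= A.
Proof.
  intros H. apply Cbounded_bounded in H. specialize (H 0 Iopen_0).
  pose proof (Rabs_pos (u 0)). lra.
Qed.

Lemma lipschitz_of_derive_bounded A u u' : derive_on u u' -> bounded_on A u' -> lipschitz_on A u.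
Proof.
  intros Hd Hb x y Hx Hy. apply (abs_increment_le u u' y x A); intros s Hs;
    [apply Hd | apply Hb]; exact (Iopen_between y x s Hy Hx Hs).
Qed.

Lemma continuous_on_of_derive u u' : derive_on u u' -> continuous_on u.
Proof. intros H x Hx. apply (is_derive_continuous _ _ (u' x)), H, Hx. Qed.

Lemma Cbounded_S_intro r A u u' :
  bounded_on A u -> derive_on u u' -> Cbounded lip r A u' -> Cbounded lip (S r) A u.
Proof.
  intros. simpl. split; [assumption|]. split; [eapply continuous_on_of_derive; eauto|].
  exists u'. auto.
Qed.

Lemma Cbounded_0_intro A u u' : bounded_on A u -> derive_on u u' -> bounded_on A u' ->
  Cbounded lip 0 A u.
Proof.
  intros. simpl. split; [assumption|]. split; [eapply continuous_on_of_derive; eauto|].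
  intros _. eapply lipschitz_of_derive_bounded; eauto.
Qed.

Lemma Cbounded_pred r A u : Cbounded lip (S r) A u -> Cbounded lip r A u.
Proof.
  revert A u. induction r; intros A u [Hb [Hc [u' [Hd H']]]].
  - apply Cbounded_0_intro with u'; [| |eapply Cbounded_bounded]; eauto.
  - apply Cbounded_S_intro with u'; auto.
Qed.

Lemma Cbounded_le_order r r' A u : (r' <= r)%nat -> Cbounded lip r A u -> Cbounded lip r' A u.
Proof.
  intros Hle; induction Hle as [|m Hle IH]; auto. intros Hu. apply IH, Cbounded_pred, Hu.
Qed.

Lemma Cbounded_le_const r A A' u : A <= A' -> Cbounded lip r A u -> Cbounded lip r A' u.
Proof.
  assert (Hbnd : forall A A' u, A <= A' -> bounded_on A u -> bounded_on A' u).
  { intros A0 A0' u0 Hl Hb x Hx. specialize (Hb x Hx). lra. }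
  revert A A' u. induction r; intros A A' u Hl H.
  - destruct H as [Hb [Hc Hlp]]. split; [eauto|]. split; [exact Hc|].
    intros HL x y Hx Hy. specialize (Hlp HL x y Hx Hy).
    pose proof (Rabs_pos (x - y)). nra.
  - destruct H as [Hb [Hc [u' [Hd H']]]]. split; [eauto|]. split; [exact Hc|].
    exists u'. split; [exact Hd | eapply IHr; eauto].
Qed.

Lemma derive_on_ext u v u' : (forall x, Iopen x -> u x = v x) -> derive_on u u' -> derive_on v u'.
Proof.
  intros He Hd x Hx. eapply is_derive_ext_loc; [|apply Hd, Hx].
  eapply filter_imp; [|apply locally_Iopen, Hx]. auto.
Qed.

Lemma Cbounded_ext r A u v : (forall x, Iopen x -> u x = v x) ->
  Cbounded lip r A u -> Cbounded lip r A v.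
Proof.
  intros He H.
  assert (Hb : bounded_on A v).
  { intros x Hx. rewrite <- He by exact Hx. eapply Cbounded_bounded; eauto. }
  assert (Hc : continuous_on v).
  { intros x Hx. eapply continuous_ext_loc; [|eapply Cbounded_continuous; eauto].
    eapply filter_imp; [|apply locally_Iopen, Hx]. auto. }
  destruct r; destruct H as [_ [_ Hr]]; split; auto; split; auto.
  - intros HL x y Hx Hy. rewrite <- !He by assumption. apply Hr; auto.
  - destruct Hr as [u' [Hd H']]. exists u'. split; [eapply derive_on_ext|]; eauto.
Qed.

Lemma Cbounded_const r c A : Rabs c <= A -> Cbounded lip r A (fun _ => c).
Proof.
  revert c. induction r; intros c Hc.
  - split; [|split].
    + intros x _; exact Hc.
    + intros x _. apply continuous_const.
    + intros _ x y _ _. rewrite Rminus_diag, Rabs_R0.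
      pose proof (Rabs_pos c). pose proof (Rabs_pos (x - y)). nra.
  - apply Cbounded_S_intro with (fun _ => 0).
    + intros x _; exact Hc.
    + intros x _. apply (is_derive_const c).
    + apply IHr. rewrite Rabs_R0. pose proof (Rabs_pos c); lra.
Qed.

Lemma Cbounded_plus r A B u v : Cbounded lip r A u -> Cbounded lip r B v ->
  Cbounded lip r (A + B) (fun x => u x + v x).
Proof.
  assert (Hbnd : forall A B u v, bounded_on A u -> bounded_on B v ->
            bounded_on (A + B) (fun x => u x + v x)).
  { intros A0 B0 u0 v0 H1 H2 x Hx. eapply Rle_trans; [apply Rabs_triang|].
    apply Rplus_le_compat; auto. }
  revert A B u v. induction r; intros A B u v Hu Hv.
  - destruct Hu as [Hb1 [Hc1 Hl1]]. destruct Hv as [Hb2 [Hc2 Hl2]].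
    split; [auto|]. split.
    + intros x Hx. apply (continuous_plus u v); auto.
    + intros HL x y Hx Hy. specialize (Hl1 HL x y Hx Hy). specialize (Hl2 HL x y Hx Hy).
      replace (u x + v x - (u y + v y)) with ((u x - u y) + (v x - v y)) by ring.
      eapply Rle_trans; [apply Rabs_triang | lra].
  - destruct Hu as [Hb1 [Hc1 [u' [Hd1 H1]]]]. destruct Hv as [Hb2 [Hc2 [v' [Hd2 H2]]]].
    apply Cbounded_S_intro with (fun x => u' x + v' x); auto.
    intros x Hx. apply is_derive_Rplus; auto.
Qed.

Lemma Cbounded_scal r A c u : Cbounded lip r A u -> Cbounded lip r (Rabs c * A) (fun x => c * u x).
Proof.
  assert (Hbnd : forall A u, bounded_on A u -> bounded_on (Rabs c * A) (fun x => c * u x)).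
  { intros A0 u0 H x Hx. rewrite Rabs_mult. apply Rmult_le_compat_l; auto using Rabs_pos. }
  revert A u. induction r; intros A u Hu.
  - destruct Hu as [Hb1 [Hc1 Hl1]]. split; [auto|]. split.
    + intros x Hx. apply (continuous_mult (fun _ => c) u); [apply continuous_const | auto].
    + intros HL x y Hx Hy. specialize (Hl1 HL x y Hx Hy).
      replace (c * u x - c * u y) with (c * (u x - u y)) by ring.
      rewrite Rabs_mult, Rmult_assoc. apply Rmult_le_compat_l; auto using Rabs_pos.
  - destruct Hu as [Hb1 [Hc1 [u' [Hd1 H1]]]].
    apply Cbounded_S_intro with (fun x => c * u' x); auto.
    intros x Hx. apply is_derive_Rscal; auto.
Qed.

Lemma lipschitz_mult A B u v : bounded_on A u -> bounded_on B v ->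
  lipschitz_on A u -> lipschitz_on B v -> lipschitz_on (2 * A * B) (fun x => u x * v x).
Proof.
  intros Hb1 Hb2 Hl1 Hl2 x y Hx Hy.
  specialize (Hl1 x y Hx Hy). specialize (Hl2 x y Hx Hy).
  specialize (Hb1 x Hx). specialize (Hb2 y Hy).
  replace (u x * v x - u y * v y) with (u x * (v x - v y) + v y * (u x - u y)) by ring.
  eapply Rle_trans; [apply Rabs_triang|]. rewrite !Rabs_mult.
  pose proof (Rabs_pos (x - y)).
  assert (Rabs (u x) * Rabs (v x - v y) <= A * (B * Rabs (x - y)))
    by (apply Rmult_le_compat; auto using Rabs_pos).
  assert (Rabs (v y) * Rabs (u x - u y) <= B * (A * Rabs (x - y)))
    by (apply Rmult_le_compat; auto using Rabs_pos).
  nra.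
Qed.

(* Each differentiation of a product at most doubles the Leibniz bound. *)
Lemma Cbounded_mult r A B u v : Cbounded lip r A u -> Cbounded lip r B v ->
  Cbounded lip r (2 ^ (S r) * A * B) (fun x => u x * v x).
Proof.
  revert A B u v. induction r; intros A B u v Hu Hv.
  - pose proof (Cbounded_nonneg _ _ _ Hu). pose proof (Cbounded_nonneg _ _ _ Hv).
    destruct Hu as [Hb1 [Hc1 Hl1]]. destruct Hv as [Hb2 [Hc2 Hl2]].
    split; [|split].
    + intros x Hx. rewrite Rabs_mult. specialize (Hb1 x Hx). specialize (Hb2 x Hx).
      pose proof (Rabs_pos (u x)). pose proof (Rabs_pos (v x)). simpl. nra.
    + intros x Hx. apply (continuous_mult u v); auto.
    + intros HL. replace (2 ^ 1 * A * B) with (2 * A * B) by ring.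
      apply lipschitz_mult; auto.
  - pose proof (Cbounded_nonneg _ _ _ Hu). pose proof (Cbounded_nonneg _ _ _ Hv).
    pose proof (Cbounded_pred _ _ _ Hu) as Hu0. pose proof (Cbounded_pred _ _ _ Hv) as Hv0.
    destruct Hu as [Hb1 [Hc1 [u' [Hd1 H1]]]]. destruct Hv as [Hb2 [Hc2 [v' [Hd2 H2]]]].
    apply Cbounded_S_intro with (fun x => u' x * v x + u x * v' x).
    + intros x Hx. rewrite Rabs_mult. specialize (Hb1 x Hx). specialize (Hb2 x Hx).
      assert (1 <= 2 ^ S (S r)) by (apply pow_R1_Rle; lra).
      assert (Rabs (u x) * Rabs (v x) <= A * B) by (apply Rmult_le_compat; auto using Rabs_pos).
      assert (0 <= A * B) by nra. nra.
    + intros x Hx. apply is_derive_Rmult; auto.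
    + replace (2 ^ S (S r) * A * B) with (2 ^ S r * A * B + 2 ^ S r * A * B) by (simpl; ring).
      apply Cbounded_plus; auto.
Qed.

End Cbounded_theory.

Definition Kmul (N : nat) : R := 2 ^ S N.

Lemma Kmul_ge2 N : 2 <= Kmul N.
Proof. unfold Kmul. simpl. assert (1 <= 2 ^ N) by (apply pow_R1_Rle; lra). lra. Qed.

Lemma Cbounded_mult_le lip N r A B u v : (r <= N)%nat ->
  Cbounded lip r A u -> Cbounded lip r B v -> Cbounded lip r (Kmul N * A * B) (fun x => u x * v x).
Proof.
  intros Hr Hu Hv.
  pose proof (Cbounded_nonneg _ _ _ _ Hu). pose proof (Cbounded_nonneg _ _ _ _ Hv).
  eapply Cbounded_le_const; [|apply Cbounded_mult; eauto].
  assert (2 ^ S r <= Kmul N) by (apply Rle_pow; [lra | lia]).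
  rewrite !Rmult_assoc. apply Rmult_le_compat_r; [nra | exact H1].
Qed.

Lemma recip_shift_bound e a : Rabs a <= e -> e <= / 8 ->
  Rabs (/ (2 + a) - / 2) <= e / 3 /\ 0 < 2 + a.
Proof.
  intros H1 H2. pose proof (proj1 (Rabs_le_between _ _) H1). split; [|lra].
  replace (/ (2 + a) - / 2) with (- a / (2 * (2 + a))) by (field; lra).
  unfold Rdiv. rewrite Rabs_mult, Rabs_Ropp, Rabs_inv, (Rabs_pos_eq (2 * (2 + a))) by lra.
  apply Rle_trans with (Rabs a * / 3).
  - apply Rmult_le_compat_l; [apply Rabs_pos | apply Rinv_le_contravar; lra].
  - apply Rmult_le_compat_r; lra.
Qed.

Lemma recip_shift_lipschitz e a b : Rabs a <= e -> Rabs b <= e -> e <= / 8 ->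
  Rabs ((/ (2 + a) - / 2) - (/ (2 + b) - / 2)) <= Rabs (a - b).
Proof.
  intros Ha Hb He.
  apply Rabs_le_between in Ha. apply Rabs_le_between in Hb.
  replace ((/ (2 + a) - / 2) - (/ (2 + b) - / 2)) with ((a - b) * - / ((2 + a) * (2 + b)))
    by (field; lra).
  rewrite Rabs_mult, Rabs_Ropp, Rabs_inv, (Rabs_pos_eq ((2 + a) * (2 + b))) by nra.
  rewrite <- (Rmult_1_r (Rabs (a - b))) at 2.
  apply Rmult_le_compat_l; [apply Rabs_pos|].
  rewrite <- Rinv_1. apply Rinv_le_contravar; [lra | nra].
Qed.

Lemma derive_recip_shift u u' x : is_derive u x (u' x) -> 0 < 2 + u x ->
  is_derive (fun x => / (2 + u x) - / 2) x (-1 * (u' x * (/ (2 + u x) * / (2 + u x)))).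
Proof.
  intros Hd Hpos. eapply is_derive_eq.
  - apply (is_derive_Rplus (fun x => / (2 + u x)) (fun _ => - / 2)).
    + apply (is_derive_Rinv (fun x => 2 + u x)); [|lra].
      apply (is_derive_Rplus (fun _ => 2) u); [apply (is_derive_const 2) | exact Hd].
    + apply (is_derive_const (- / 2)).
  - change zero with 0. field. lra.
Qed.

Lemma Cbounded_recip_shift lip N r e eps : (r <= N)%nat -> e <= / (2 * Kmul N ^ 2) ->
  Cbounded lip r e eps -> Cbounded lip r (Kmul N ^ 2 * e) (fun x => / (2 + eps x) - / 2).
Proof.
  pose proof (Kmul_ge2 N) as HK. assert (HK2 : 4 <= Kmul N ^ 2) by (simpl; nra).
  intros Hr He. assert (He8 : e <= / 8).
  { eapply Rle_trans; [exact He | apply Rinv_le_contravar; lra]. }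
  revert eps. induction r; intros eps H; pose proof (Cbounded_nonneg _ _ _ _ H) as He0.
  - destruct H as [Hb [Hc Hl]]. split; [|split].
    + intros x Hx. destruct (recip_shift_bound e (eps x) (Hb x Hx) He8). nra.
    + intros x Hx. destruct (recip_shift_bound e (eps x) (Hb x Hx) He8).
      apply (continuous_plus (fun x => / (2 + eps x)) (fun _ => - / 2));
        [|apply continuous_const].
      apply continuous_Rinv_comp; [|simpl; lra].
      apply (continuous_plus (fun _ => 2) eps); [apply continuous_const | auto].
    + intros HL x y Hx Hy. specialize (Hl HL x y Hx Hy).
      eapply Rle_trans; [apply (recip_shift_lipschitz e); auto|].
      pose proof (Rabs_pos (x - y)). assert (0 <= e * Rabs (x - y)) by nra.
      rewrite Rmult_assoc. nra.
  - assert (IH := IHr ltac:(lia) eps (Cbounded_pred _ _ _ _ H)).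
    destruct H as [Hb [Hc [e' [Hd H']]]].
    set (w := fun x => / (2 + eps x)).
    apply Cbounded_S_intro with (fun x => -1 * (e' x * (w x * w x))).
    + intros x Hx. destruct (recip_shift_bound e (eps x) (Hb x Hx) He8). nra.
    + intros x Hx. apply derive_recip_shift; [apply Hd, Hx|].
      exact (proj2 (recip_shift_bound e (eps x) (Hb x Hx) He8)).
    + assert (Hw : Cbounded lip r 1 w).
      { eapply Cbounded_le_const; [|eapply Cbounded_ext;
          [|apply Cbounded_plus; [exact IH | apply (Cbounded_const lip r (/ 2) (/ 2))]]].
        - assert (Kmul N ^ 2 * e <= / 2).
          { apply Rle_trans with (Kmul N ^ 2 * / (2 * Kmul N ^ 2));
              [apply Rmult_le_compat_l; lra | right; field; lra]. }
          lra.
        - intros x Hx. unfold w. ring.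
        - rewrite Rabs_pos_eq; lra. }
      assert (Hww := Cbounded_mult_le lip N r 1 1 w w ltac:(lia) Hw Hw).
      assert (Hew := Cbounded_mult_le lip N r _ _ _ _ ltac:(lia) H' Hww).
      eapply Cbounded_le_const; [|exact (Cbounded_scal _ _ _ (-1) _ Hew)].
      replace (Rabs (-1)) with 1 by (unfold Rabs; destruct Rcase_abs; lra).
      right. simpl. ring.
Qed.

Record Ck_unit (k : nat) (F : R -> R) (Fd : nat -> R -> R) : Prop := {
  Ck_unit_Ck : Ck_I k F Fd;
  Ck_unit_0 : F 0 = 0;
  Ck_unit_bound : forall j x, (1 <= j <= k)%nat -> I11 x -> Rabs (Fd j x) <= 1 }.
Arguments Ck_unit_Ck {k F Fd}.
Arguments Ck_unit_0 {k F Fd}.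
Arguments Ck_unit_bound {k F Fd}.

Section Graph.
Variables (k : nat) (F : R -> R) (Fd : nat -> R -> R).
Hypotheses (Hk : (1 <= k)%nat) (HF : Ck_unit k F Fd).

Lemma Fd_derive j x : (j < k)%nat -> Iopen x -> is_derive (Fd j) x (Fd (S j) x).
Proof.
  intros Hj Hx. apply is_derive_of_is_deriv_I; [exact Hx|].
  apply (proj1 (proj2 (Ck_unit_Ck HF))); [exact Hj | apply Iopen_I11, Hx].
Qed.

Lemma Fd_continuous j x : (j <= k)%nat -> Iopen x -> continuous (Fd j) x.
Proof.
  intros Hj Hx. apply continuous_of_cont_I; [exact Hx|].
  apply (proj2 (proj2 (Ck_unit_Ck HF))); [exact Hj | apply Iopen_I11, Hx].
Qed.

Lemma F_derive x : Iopen x -> is_derive F x (Fd 1 x).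
Proof.
  intros Hx. eapply is_derive_ext_loc; [|apply Fd_derive; [lia | exact Hx]].
  eapply filter_imp; [|apply locally_Iopen, Hx]. simpl. intros y Hy.
  apply (proj1 (Ck_unit_Ck HF)), Iopen_I11, Hy.
Qed.

Lemma F_small x : Iopen x -> Rabs (F x) <= Rabs x.
Proof.
  intros Hx. replace (F x) with (F x - F 0) by (rewrite (Ck_unit_0 HF); ring).
  rewrite <- (Rminus_0_r x) at 2. rewrite <- (Rmult_1_l (Rabs (x - 0))).
  apply (abs_increment_le F (Fd 1)); intros s Hs;
    pose proof (Iopen_between 0 x s Iopen_0 Hx Hs) as Hs'.
  - apply F_derive, Hs'.
  - apply (Ck_unit_bound HF); [lia | apply Iopen_I11, Hs'].
Qed.

Lemma F_bounded x : I11 x -> Rabs (F x) <= 1.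
Proof.
  intros Hx. destruct (Ck_unit_Ck HF) as [HF0 [_ Hc]].
  rewrite <- (HF0 x Hx). apply (bound_of_cont_I _ x); [exact Hx | apply Hc; [lia | exact Hx]|].
  intros y Hy. rewrite HF0 by (apply Iopen_I11, Hy).
  pose proof (F_small y Hy). pose proof (Iopen_abs y Hy). lra.
Qed.

Lemma Cbounded_Fd lip r j : (lip = true -> lipschitz_on 1 (Fd k)) ->
  (1 <= j)%nat -> (j + r = k)%nat -> Cbounded lip r 1 (Fd j).
Proof.
  intros HL. revert j. induction r; intros j Hj Hjr.
  - replace j with k by lia. split; [|split]; [| |exact HL].
    + intros x Hx. apply (Ck_unit_bound HF); [lia | apply Iopen_I11, Hx].
    + intros x Hx. apply Fd_continuous; [lia | exact Hx].
  - apply Cbounded_S_intro with (Fd (S j)); [| |apply IHr; lia].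
    + intros x Hx. apply (Ck_unit_bound HF); [lia | apply Iopen_I11, Hx].
    + intros x Hx. apply Fd_derive; [lia | exact Hx].
Qed.

Lemma Cbounded_Fd1 lip r : (lip = true -> lipschitz_on 1 (Fd k)) -> (r <= k - 1)%nat ->
  Cbounded lip r 1 (Fd 1).
Proof.
  intros HL Hr. apply Cbounded_le_order with (k - 1)%nat; [exact Hr|].
  apply Cbounded_Fd; [exact HL | lia | lia].
Qed.

End Graph.

Record small_high_partials (N : nat) (U : R * R -> Prop) (g : R * R -> R) (delta : R) : Prop := {
  shp_domain : forall p, Binf1 p -> U p;
  shp_Cm : Cm_on (S N) U g;
  shp_bound : forall w, (2 <= length w <= S N)%nat -> forall p, U p -> Rabs (pdw w g p) <= delta;
  shp_pos : 0 < delta }.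
Arguments shp_domain {N U g delta}.
Arguments shp_Cm {N U g delta}.
Arguments shp_bound {N U g delta}.
Arguments shp_pos {N U g delta}.

Definition Khigh (N r : nat) : R := 2 * (1 + Kmul N) ^ r.
Definition Kfirst (N r : nat) : R := 2 + Khigh N r.

Lemma Khigh_pos N r : 0 < Khigh N r.
Proof. unfold Khigh. pose proof (Kmul_ge2 N). apply Rmult_lt_0_compat, pow_lt; lra. Qed.

Lemma Khigh_ge2 N r : 2 <= Khigh N r.
Proof.
  unfold Khigh. pose proof (Kmul_ge2 N).
  assert (1 <= (1 + Kmul N) ^ r) by (apply pow_R1_Rle; lra). lra.
Qed.

Lemma Kfirst_le N r r' : (r <= r')%nat -> Kfirst N r <= Kfirst N r'.
Proof.
  intros H. unfold Kfirst, Khigh. pose proof (Kmul_ge2 N).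
  assert ((1 + Kmul N) ^ r <= (1 + Kmul N) ^ r') by (apply Rle_pow; [lra | exact H]). lra.
Qed.

Lemma abs_between a b s : Rabs a <= 1 -> Rabs b <= 1 -> Rmin a b <= s <= Rmax a b ->
  Rabs s <= 1.
Proof.
  intros Ha Hb Hs. apply Rabs_le_between in Ha. apply Rabs_le_between in Hb. apply Rabs_le.
  unfold Rmin, Rmax in Hs. destruct (Rle_dec a b); lra.
Qed.

Section Partials_along_graph.
Variables (N k : nat) (U : R * R -> Prop) (g : R * R -> R) (F : R -> R) (Fd : nat -> R -> R)
  (delta : R) (lip : bool).
Hypotheses (Hk : (1 <= k <= N)%nat) (Hg : small_high_partials N U g delta)
  (HF : Ck_unit k F Fd) (HL : lip = true -> lipschitz_on 1 (Fd k)).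

Definition graph_partial (w : list bool) (x : R) : R := pdw w g (x, F x).

Lemma graph_in_square x : Iopen x -> Rabs x < 1 /\ Rabs (F x) < 1.
Proof.
  intros Hx. pose proof (Iopen_abs x Hx). pose proof (F_small k F Fd ltac:(lia) HF x Hx).
  split; lra.
Qed.

Lemma partial_ex_derive w p : (length w < S N)%nat -> Binf1 p ->
  ex_derive (fun t => pdw w g (t, snd p)) (fst p) /\
  ex_derive (fun t => pdw w g (fst p, t)) (snd p).
Proof. intros Hw Hp. apply (proj1 (shp_Cm Hg)); [exact Hw | apply (shp_domain Hg), Hp]. Qed.

Lemma partial_increment1 w c M a b y : (length w < S N)%nat ->
  Rabs a <= 1 -> Rabs b <= 1 -> Rabs y <= 1 ->
  (forall s, Rabs s <= 1 -> Rabs (pdw (false :: w) g (s, y) - c) <= M) ->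
  Rabs (pdw w g (b, y) - pdw w g (a, y) - c * (b - a)) <= M * Rabs (b - a).
Proof.
  intros Hw Ha Hb Hy HM.
  apply (increment_bound (fun s => pdw w g (s, y)) (fun s => pdw (false :: w) g (s, y)));
    intros s Hs; pose proof (abs_between a b s Ha Hb Hs).
  - apply Derive_correct, (partial_ex_derive w (s, y)); [exact Hw | split; assumption].
  - apply HM. assumption.
Qed.

Lemma partial_increment2 w c M a b x : (length w < S N)%nat ->
  Rabs a <= 1 -> Rabs b <= 1 -> Rabs x <= 1 ->
  (forall s, Rabs s <= 1 -> Rabs (pdw (true :: w) g (x, s) - c) <= M) ->
  Rabs (pdw w g (x, b) - pdw w g (x, a) - c * (b - a)) <= M * Rabs (b - a).
Proof.
  intros Hw Ha Hb Hx HM.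
  apply (increment_bound (fun s => pdw w g (x, s)) (fun s => pdw (true :: w) g (x, s)));
    intros s Hs; pose proof (abs_between a b s Ha Hb Hs).
  - apply Derive_correct, (partial_ex_derive w (x, s)); [exact Hw | split; assumption].
  - apply HM. assumption.
Qed.

Lemma graph_partial_derive w x : (length w <= N)%nat -> Iopen x ->
  is_derive (graph_partial w) x
    (graph_partial (false :: w) x + graph_partial (true :: w) x * Fd 1 x).
Proof.
  intros Hw Hx. destruct (graph_in_square x Hx) as [H1 H2].
  assert (Hm : 0 < Rmin (1 - Rabs x) (1 - Rabs (F x))) by (apply Rmin_glb_lt; lra).
  pose proof (Rmin_l (1 - Rabs x) (1 - Rabs (F x))).
  pose proof (Rmin_r (1 - Rabs x) (1 - Rabs (F x))).
  eapply is_derive_eq.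
  - apply (is_derive_comp2 (pdw w g) (fun t => t) F x); [|apply (is_derive_id x) |].
    + apply differentiable_of_partials.
      * exists (mkposreal _ Hm). simpl. intros u v Hu Hv.
        apply (partial_ex_derive w (u, v)); [lia|].
        pose proof (Rabs_triang_inv u x). pose proof (Rabs_triang_inv v (F x)).
        split; simpl; lra.
      * apply (partial_ex_derive w (x, F x)); [lia | split; simpl; lra].
      * apply (proj2 (shp_Cm Hg) (false :: w)); [simpl; lia|].
        apply (shp_domain Hg). split; simpl; lra.
    + apply (F_derive k F Fd); [lia | exact HF | exact Hx].
  - change one with 1. unfold graph_partial. simpl. ring.
Qed.

Lemma graph_partial_bound w x : (2 <= length w <= S N)%nat -> Iopen x ->
  Rabs (graph_partial w x) <= delta.
Proof.
  intros Hw Hx. apply (shp_bound Hg); [exact Hw|].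
  apply (shp_domain Hg). destruct (graph_in_square x Hx). split; simpl; lra.
Qed.

Lemma graph_partial_next_bound w x : (1 <= length w <= N)%nat -> Iopen x ->
  Rabs (graph_partial (false :: w) x + graph_partial (true :: w) x * Fd 1 x) <= 2 * delta.
Proof.
  intros Hw Hx. eapply Rle_trans; [apply Rabs_triang|]. rewrite Rabs_mult.
  assert (Rabs (graph_partial (false :: w) x) <= delta)
    by (apply graph_partial_bound; [simpl; lia | exact Hx]).
  assert (Rabs (graph_partial (true :: w) x) <= delta)
    by (apply graph_partial_bound; [simpl; lia | exact Hx]).
  assert (Rabs (Fd 1 x) <= 1) by (apply (Ck_unit_bound HF); [lia | apply Iopen_I11, Hx]).
  pose proof (Rabs_pos (Fd 1 x)). pose proof (Rabs_pos (graph_partial (true :: w) x)). nra.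
Qed.

Lemma graph_partial_high r w : (2 <= length w)%nat -> (r + length w <= N)%nat -> (r <= k)%nat ->
  Cbounded lip r (Khigh N r * delta) (graph_partial w).
Proof.
  pose proof (Kmul_ge2 N). pose proof (shp_pos Hg).
  revert w. induction r; intros w Hw1 Hw2 Hr.
  - apply Cbounded_0_intro with
      (fun x => graph_partial (false :: w) x + graph_partial (true :: w) x * Fd 1 x).
    + intros x Hx. eapply Rle_trans; [apply graph_partial_bound; [lia | exact Hx]|].
      unfold Khigh. simpl. lra.
    + intros x Hx. apply graph_partial_derive; [lia | exact Hx].
    + intros x Hx. eapply Rle_trans; [apply graph_partial_next_bound; [lia | exact Hx]|].
      unfold Khigh. simpl. lra.
  - apply Cbounded_S_intro with
      (fun x => graph_partial (false :: w) x + graph_partial (true :: w) x * Fd 1 x).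
    + intros x Hx. eapply Rle_trans; [apply graph_partial_bound; [lia | exact Hx]|].
      pose proof (Khigh_ge2 N (S r)). nra.
    + intros x Hx. apply graph_partial_derive; [lia | exact Hx].
    + assert (H1 := IHr (false :: w) ltac:(simpl; lia) ltac:(simpl; lia) ltac:(lia)).
      assert (H2 := IHr (true :: w) ltac:(simpl; lia) ltac:(simpl; lia) ltac:(lia)).
      assert (H3 := Cbounded_Fd1 k F Fd ltac:(lia) HF lip r HL ltac:(lia)).
      assert (H4 := Cbounded_mult_le lip N r _ _ _ _ ltac:(lia) H2 H3).
      eapply Cbounded_le_const; [|exact (Cbounded_plus _ _ _ _ _ _ H1 H4)].
      unfold Khigh. simpl. right. ring.
Qed.

Lemma first_partial_near_origin w : length w = 1%nat -> forall p, Binf1 p ->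
  Rabs (pdw w g p - pdw w g (0, 0)) <= 2 * delta.
Proof.
  intros Hw [p1 p2] [H1 H2]. simpl in H1, H2.
  assert (R0 : Rabs 0 <= 1) by (rewrite Rabs_R0; lra).
  assert (HB : forall b s t, Rabs s <= 1 -> Rabs t <= 1 ->
            Rabs (pdw (b :: w) g (s, t) - 0) <= delta).
  { intros b s t Hs Ht. rewrite Rminus_0_r. apply (shp_bound Hg); [simpl; lia|].
    apply (shp_domain Hg). split; assumption. }
  assert (A1 := partial_increment1 w 0 delta 0 p1 p2 ltac:(lia) R0 H1 H2
                  (fun s Hs => HB false s p2 Hs H2)).
  assert (A2 := partial_increment2 w 0 delta 0 p2 0 ltac:(lia) R0 H2 R0
                  (fun s Hs => HB true 0 s R0 Hs)).
  rewrite Rmult_0_l, !Rminus_0_r in A1, A2.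
  replace (pdw w g (p1, p2) - pdw w g (0, 0))
    with ((pdw w g (p1, p2) - pdw w g (0, p2)) + (pdw w g (0, p2) - pdw w g (0, 0))) by ring.
  eapply Rle_trans; [apply Rabs_triang|].
  pose proof (shp_pos Hg). pose proof (Rabs_pos p1). pose proof (Rabs_pos p2). nra.
Qed.

Lemma graph_partial_first r w : length w = 1%nat -> (r + 1 <= N)%nat -> (r <= k)%nat ->
  Cbounded lip r (Kfirst N r * delta) (fun x => graph_partial w x - pdw w g (0, 0)).
Proof.
  intros Hw Hr1 Hr2. pose proof (Kmul_ge2 N). pose proof (shp_pos Hg).
  set (w' := fun x => graph_partial (false :: w) x + graph_partial (true :: w) x * Fd 1 x).
  assert (Hd : derive_on (fun x => graph_partial w x - pdw w g (0, 0)) w').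
  { intros x Hx. eapply is_derive_eq.
    - apply (is_derive_Rplus (graph_partial w) (fun _ => - pdw w g (0, 0))).
      + apply graph_partial_derive; [lia | exact Hx].
      + apply (is_derive_const (- pdw w g (0, 0))).
    - change zero with 0. unfold w'. ring. }
  assert (Hb : bounded_on (Kfirst N r * delta) (fun x => graph_partial w x - pdw w g (0, 0))).
  { intros x Hx. eapply Rle_trans.
    - apply first_partial_near_origin; [exact Hw|].
      destruct (graph_in_square x Hx). split; simpl; lra.
    - unfold Kfirst. pose proof (Khigh_pos N r). nra. }
  destruct r as [|r].
  - apply Cbounded_0_intro with w'; [exact Hb | exact Hd|].
    intros x Hx. eapply Rle_trans; [apply graph_partial_next_bound; [lia | exact Hx]|].
    pose proof (Khigh_pos N 0). unfold Kfirst. nra.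
  - apply Cbounded_S_intro with w'; [exact Hb | exact Hd|].
    assert (H1 := graph_partial_high r (false :: w) ltac:(simpl; lia) ltac:(simpl; lia) ltac:(lia)).
    assert (H2 := graph_partial_high r (true :: w) ltac:(simpl; lia) ltac:(simpl; lia) ltac:(lia)).
    assert (H3 := Cbounded_Fd1 k F Fd ltac:(lia) HF lip r HL ltac:(lia)).
    assert (H4 := Cbounded_mult_le lip N r _ _ _ _ ltac:(lia) H2 H3).
    eapply Cbounded_le_const; [|exact (Cbounded_plus _ _ _ _ _ _ H1 H4)].
    unfold Kfirst, Khigh. simpl. lra.
Qed.

End Partials_along_graph.

Definition Kslope (N : nat) : R := (1 + Kmul N) * Kfirst N N.
Definition recip_margin (N : nat) : R := / (2 * Kmul N ^ 2).
Definition Krecip (N : nat) : R := Kmul N ^ 2 * Kslope N.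
Fixpoint Kder (N j : nat) : R :=
  match j with
  | O => Kmul N * Kfirst N N + Kmul N * (Kmul N * Kfirst N N) + Kmul N * Krecip N
  | S j' => Kmul N * Krecip N + Kmul N * Kder N j'
  end.

(* The bound 1/16 keeps phi_1 from mapping the vertical sides |x1| = 1 of the square into
   |y1| <= 1; the other one makes h' - 2 small enough for [Cbounded_recip_shift]. *)
Definition delta0 (N : nat) : R := Rmin (/ 16) (recip_margin N / Kslope N).

Lemma Kslope_pos N : 0 < Kslope N.
Proof.
  unfold Kslope, Kfirst. pose proof (Kmul_ge2 N). pose proof (Khigh_pos N N).
  apply Rmult_lt_0_compat; lra.
Qed.

Lemma recip_margin_pos N : 0 < recip_margin N.
Proof. unfold recip_margin. pose proof (Kmul_ge2 N). apply Rinv_0_lt_compat. nra. Qed.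

Lemma delta0_pos N : 0 < delta0 N.
Proof.
  apply Rmin_glb_lt; [lra|].
  apply Rdiv_lt_0_compat; [apply recip_margin_pos | apply Kslope_pos].
Qed.

Lemma Krecip_pos N : 0 < Krecip N.
Proof.
  unfold Krecip. pose proof (Kmul_ge2 N).
  apply Rmult_lt_0_compat; [apply pow_lt; lra | apply Kslope_pos].
Qed.

Lemma Kder_pos N j : 0 < Kder N j.
Proof.
  pose proof (Kmul_ge2 N). pose proof (Krecip_pos N).
  assert (0 < Kfirst N N) by (unfold Kfirst; pose proof (Khigh_pos N N); lra).
  induction j; simpl; nra.
Qed.

Lemma Kder_le N j j' : (j <= j')%nat -> Kder N j <= Kder N j'.
Proof.
  intros H. induction H as [|m H IH]; [lra|]. eapply Rle_trans; [exact IH|]. simpl.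
  pose proof (Kmul_ge2 N). pose proof (Krecip_pos N). pose proof (Kder_pos N m). nra.
Qed.

Definition chart1 (phi : R * R -> R * R) (p : R * R) : R := fst (phi p).
Definition chart2 (phi : R * R -> R * R) (p : R * R) : R := snd (phi p).

Record hyperbolic_chart (N : nat) (U : R * R -> Prop) (phi : R * R -> R * R) (delta : R)
  : Prop := {
  chart_first : small_high_partials N U (chart1 phi) delta;
  chart_second : small_high_partials N U (chart2 phi) delta;
  chart_origin : phi (0, 0) = (0, 0);
  chart_d11 : pd1 (chart1 phi) (0, 0) = 2;
  chart_d12 : pd2 (chart1 phi) (0, 0) = 0;
  chart_d21 : pd1 (chart2 phi) (0, 0) = 0;
  chart_d22 : pd2 (chart2 phi) (0, 0) = 1 / 2;
  chart_small : delta <= delta0 N }.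
Arguments chart_first {N U phi delta}.
Arguments chart_second {N U phi delta}.
Arguments chart_origin {N U phi delta}.
Arguments chart_d11 {N U phi delta}.
Arguments chart_d12 {N U phi delta}.
Arguments chart_d21 {N U phi delta}.
Arguments chart_d22 {N U phi delta}.
Arguments chart_small {N U phi delta}.

Lemma locally_abs_lt y c : Rabs y < c -> locally y (fun z => Rabs z < c).
Proof.
  intros Hy. exists (mkposreal (c - Rabs y) ltac:(lra)). intros z Hz.
  assert (Rabs (z - y) < c - Rabs y) by exact Hz.
  pose proof (Rabs_triang_inv z y). lra.
Qed.

Section Graph_transform.
Variables (N k : nat) (U : R * R -> Prop) (phi : R * R -> R * R) (delta : R)
  (F : R -> R) (Fd : nat -> R -> R) (lip : bool).
Hypotheses (Hk : (1 <= k <= N)%nat) (Hphi : hyperbolic_chart N U phi delta)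
  (HF : Ck_unit k F Fd) (HL : lip = true -> lipschitz_on 1 (Fd k)).

Lemma chart_partial_first g b : small_high_partials N U g delta ->
  Cbounded lip (k - 1) (Kfirst N (k - 1) * delta)
    (fun x => graph_partial g F (b :: nil) x - pdw (b :: nil) g (0, 0)).
Proof. intros Hg. apply (graph_partial_first N k U g F Fd delta lip); auto; lia. Qed.

Lemma delta_pos : 0 < delta.
Proof. exact (shp_pos (chart_first Hphi)). Qed.

Lemma Kslope_delta : Kslope N * delta <= recip_margin N.
Proof.
  pose proof (Kslope_pos N).
  assert (delta <= recip_margin N / Kslope N)
    by (eapply Rle_trans; [exact (chart_small Hphi) | apply Rmin_r]).
  apply Rmult_le_reg_r with (/ Kslope N); [apply Rinv_0_lt_compat; lra|].
  replace (Kslope N * delta * / Kslope N) with delta by (field; lra). exact H0.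
Qed.

(* [hslope] and [aslope] are the derivatives of x |-> phi_i (x, F x). *)
Definition hslope (x : R) : R :=
  graph_partial (chart1 phi) F (false :: nil) x
  + graph_partial (chart1 phi) F (true :: nil) x * Fd 1 x.
Definition aslope (x : R) : R :=
  graph_partial (chart2 phi) F (false :: nil) x
  + graph_partial (chart2 phi) F (true :: nil) x * Fd 1 x.
Definition inv_slope (x : R) : R := / hslope x.

Lemma slope_near_2 : Cbounded lip (k - 1) (Kslope N * delta) (fun x => hslope x - 2).
Proof.
  pose proof delta_pos. pose proof (Kmul_ge2 N).
  assert (E1 := chart_partial_first _ false (chart_first Hphi)).
  assert (E2 := chart_partial_first _ true (chart_first Hphi)).
  assert (F1 := Cbounded_Fd1 k F Fd ltac:(lia) HF lip (k - 1) HL ltac:(lia)).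
  assert (H3 := Cbounded_mult_le lip N (k - 1) _ _ _ _ ltac:(lia) E2 F1).
  assert (H4 := Cbounded_plus _ _ _ _ _ _ E1 H3).
  eapply Cbounded_le_const; [|eapply Cbounded_ext; [|exact H4]].
  - unfold Kslope. pose proof (Kfirst_le N (k - 1) N ltac:(lia)).
    replace (Kfirst N (k - 1) * delta + Kmul N * (Kfirst N (k - 1) * delta) * 1)
      with ((1 + Kmul N) * (Kfirst N (k - 1) * delta)) by ring.
    rewrite Rmult_assoc. apply Rmult_le_compat_l; [lra|]. apply Rmult_le_compat_r; lra.
  - intros x Hx. unfold hslope.
    change (pdw (false :: nil) (chart1 phi) (0, 0)) with (pd1 (chart1 phi) (0, 0)).
    change (pdw (true :: nil) (chart1 phi) (0, 0)) with (pd2 (chart1 phi) (0, 0)).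
    rewrite (chart_d11 Hphi), (chart_d12 Hphi). ring.
Qed.

Lemma hslope_bounds x : Iopen x -> 15 / 8 <= hslope x <= 17 / 8.
Proof.
  intros Hx. pose proof (Cbounded_bounded _ _ _ _ slope_near_2 x Hx) as H.
  pose proof Kslope_delta. pose proof (Kmul_ge2 N).
  assert (recip_margin N <= / 8)
    by (unfold recip_margin; apply Rinv_le_contravar; [lra | simpl; nra]).
  apply Rabs_le_between in H. lra.
Qed.

Lemma inv_slope_near_half : Cbounded lip (k - 1) (Krecip N * delta) (fun x => inv_slope x - / 2).
Proof.
  assert (H := Cbounded_recip_shift lip N (k - 1) _ _ ltac:(lia) Kslope_delta slope_near_2).
  eapply Cbounded_le_const; [|eapply Cbounded_ext; [|exact H]].
  - unfold Krecip. right. ring.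
  - intros x Hx. unfold inv_slope. replace (2 + (hslope x - 2)) with (hslope x) by ring.
    reflexivity.
Qed.

Lemma inv_slope_Cbounded r : (r <= k - 1)%nat -> Cbounded lip r 1 inv_slope.
Proof.
  intros Hr. apply Cbounded_le_order with (k - 1)%nat; [exact Hr|].
  eapply Cbounded_le_const; [|eapply Cbounded_ext;
    [|apply Cbounded_plus;
      [exact inv_slope_near_half | apply (Cbounded_const lip (k - 1) (/ 2) (/ 2))]]].
  - assert (Krecip N * delta <= / 2).
    { unfold Krecip. pose proof Kslope_delta. pose proof (Kmul_ge2 N).
      apply Rle_trans with (Kmul N ^ 2 * recip_margin N).
      - rewrite Rmult_assoc. apply Rmult_le_compat_l; [simpl; nra | assumption].
      - unfold recip_margin. right. field. simpl. nra. }
    lra.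
  - intros x Hx. simpl. ring.
  - rewrite Rabs_pos_eq; lra.
Qed.

(* [gder j] o h^{-1} is the (j+1)-st derivative of the graph transform. *)
Fixpoint gder (j : nat) : R -> R :=
  match j with
  | O => fun x => aslope x * inv_slope x
  | S j' => fun x => Derive (gder j') x * inv_slope x
  end.

Definition gder_expansion (j : nat) (eta : R -> R) : Prop :=
  Cbounded lip (k - 1 - j) (Kder N j * delta) eta /\
  forall x, Iopen x -> gder j x = / 2 ^ (j + 2) * Fd (S j) x + eta x.

Lemma gder_expansion_0 : exists eta, gder_expansion 0 eta.
Proof.
  pose proof (Kmul_ge2 N) as HK. pose proof (Krecip_pos N). pose proof delta_pos.
  pose proof (Kfirst_le N (k - 1) N ltac:(lia)). pose proof (Khigh_pos N (k - 1)).
  assert (E3 := chart_partial_first _ false (chart_second Hphi)).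
  assert (E4 := chart_partial_first _ true (chart_second Hphi)).
  assert (W1 := inv_slope_Cbounded (k - 1) ltac:(lia)).
  assert (F1 := Cbounded_Fd1 k F Fd ltac:(lia) HF lip (k - 1) HL ltac:(lia)).
  assert (T1 := Cbounded_mult_le lip N (k - 1) _ _ _ _ ltac:(lia) E3 W1).
  assert (T2 := Cbounded_mult_le lip N (k - 1) _ _ _ _ ltac:(lia)
                  (Cbounded_mult_le lip N (k - 1) _ _ _ _ ltac:(lia) E4 F1) W1).
  assert (T3 := Cbounded_scal _ _ _ (/ 2) _
                  (Cbounded_mult_le lip N (k - 1) _ _ _ _ ltac:(lia) F1 inv_slope_near_half)).
  eexists. split.
  - rewrite Nat.sub_0_r. eapply Cbounded_le_const;
      [|exact (Cbounded_plus _ _ _ _ _ _ (Cbounded_plus _ _ _ _ _ _ T1 T2) T3)].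
    rewrite Rabs_pos_eq by lra. simpl.
    set (P := Kmul N) in *. set (Kf := Kfirst N (k - 1)) in *.
    assert (A1 : P * (Kf * delta) * 1 <= P * Kfirst N N * delta).
    { rewrite Rmult_1_r, Rmult_assoc. apply Rmult_le_compat_l; [lra|].
      apply Rmult_le_compat_r; lra. }
    assert (A2 : P * (P * (Kf * delta) * 1) * 1 <= P * (P * Kfirst N N) * delta).
    { rewrite !Rmult_1_r, (Rmult_assoc P (P * Kfirst N N)). apply Rmult_le_compat_l; [lra|].
      rewrite Rmult_assoc. apply Rmult_le_compat_l; [lra|]. apply Rmult_le_compat_r; lra. }
    assert (0 <= P * Krecip N * delta) by (apply Rmult_le_pos; [apply Rmult_le_pos|]; lra).
    lra.
  - intros x Hx. simpl. unfold aslope.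
    change (pdw (false :: nil) (chart2 phi) (0, 0)) with (pd1 (chart2 phi) (0, 0)).
    change (pdw (true :: nil) (chart2 phi) (0, 0)) with (pd2 (chart2 phi) (0, 0)).
    rewrite (chart_d21 Hphi), (chart_d22 Hphi). field.
Qed.

Lemma gder_derive_of_expansion j eta eta' x : (j + 1 < k)%nat ->
  (forall x, Iopen x -> gder j x = / 2 ^ (j + 2) * Fd (S j) x + eta x) ->
  derive_on eta eta' -> Iopen x ->
  is_derive (gder j) x (/ 2 ^ (j + 2) * Fd (S (S j)) x + eta' x).
Proof.
  intros Hj He Hd Hx.
  apply is_derive_ext_loc with (fun x => / 2 ^ (j + 2) * Fd (S j) x + eta x).
  - eapply filter_imp; [|apply locally_Iopen, Hx]. intros y Hy. symmetry. apply He, Hy.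
  - apply is_derive_Rplus; [apply is_derive_Rscal, (Fd_derive k F Fd HF); [lia|] | apply Hd];
      exact Hx.
Qed.

Lemma inv_pow2_le j : 0 < / 2 ^ (j + 2) <= / 4.
Proof.
  split; [apply Rinv_0_lt_compat, pow_lt; lra|].
  apply Rinv_le_contravar; [lra|]. replace (j + 2)%nat with (S (S j)) by lia. simpl.
  assert (1 <= 2 ^ j) by (apply pow_R1_Rle; lra). lra.
Qed.

Lemma gder_expansion_S j eta : (j + 2 <= k)%nat -> gder_expansion j eta ->
  exists eta', gder_expansion (S j) eta'.
Proof.
  intros Hj [Heta Eeta]. pose proof (Kmul_ge2 N). pose proof (Krecip_pos N). pose proof delta_pos.
  pose proof (Kder_pos N j). pose proof (inv_pow2_le j).
  replace (k - 1 - j)%nat with (S (k - 1 - S j)) in Heta by lia.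
  destruct Heta as [_ [_ [eta' [Hd Heta']]]].
  assert (HD : forall x, Iopen x -> Derive (gder j) x = / 2 ^ (j + 2) * Fd (S (S j)) x + eta' x).
  { intros x Hx. apply is_derive_unique, gder_derive_of_expansion with eta; auto; lia. }
  assert (F2 := Cbounded_Fd k F Fd ltac:(lia) HF lip (k - 1 - S j) (S (S j)) HL
                  ltac:(lia) ltac:(lia)).
  assert (W0 := Cbounded_le_order lip (k - 1) (k - 1 - S j) _ _ ltac:(lia) inv_slope_near_half).
  assert (W1 := inv_slope_Cbounded (k - 1 - S j) ltac:(lia)).
  assert (T1 := Cbounded_scal _ _ _ (/ 2 ^ (j + 2)) _
                  (Cbounded_mult_le lip N (k - 1 - S j) _ _ _ _ ltac:(lia) F2 W0)).
  assert (T2 := Cbounded_mult_le lip N (k - 1 - S j) _ _ _ _ ltac:(lia) Heta' W1).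
  eexists. split.
  - eapply Cbounded_le_const; [|exact (Cbounded_plus _ _ _ _ _ _ T1 T2)]. simpl.
    rewrite Rabs_pos_eq by lra.
    assert (/ 2 ^ (j + 2) * (Kmul N * 1 * (Krecip N * delta)) <= Kmul N * Krecip N * delta).
    { replace (Kmul N * Krecip N * delta) with (1 * (Kmul N * 1 * (Krecip N * delta))) by ring.
      apply Rmult_le_compat_r; [|lra]. rewrite Rmult_1_r.
      apply Rmult_le_pos; [|apply Rmult_le_pos]; lra. }
    lra.
  - intros x Hx. simpl. rewrite HD by exact Hx.
    replace (j + 2)%nat with (S (S j)) by lia. simpl.
    assert (0 < 2 ^ j) by (apply pow_lt; lra). pose proof (hslope_bounds x Hx).
    unfold inv_slope. field. split; lra.
Qed.

Lemma gder_expansion_exists j : (j + 1 <= k)%nat -> exists eta, gder_expansion j eta.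
Proof.
  induction j as [|j IH]; intros Hj; [exact gder_expansion_0|].
  destruct (IH ltac:(lia)) as [eta Heta]. apply gder_expansion_S with eta; [lia | exact Heta].
Qed.

Lemma gder_derive j x : (j + 1 < k)%nat -> Iopen x -> is_derive (gder j) x (Derive (gder j) x).
Proof.
  intros Hj Hx. apply Derive_correct.
  destruct (gder_expansion_exists j ltac:(lia)) as [eta [Heta Eeta]].
  replace (k - 1 - j)%nat with (S (k - 1 - S j)) in Heta by lia.
  destruct Heta as [_ [_ [eta' [Hd _]]]].
  eexists. apply gder_derive_of_expansion with eta; [lia | exact Eeta | exact Hd | exact Hx].
Qed.

Lemma gder_continuous j x : (j + 1 <= k)%nat -> Iopen x -> continuous (gder j) x.
Proof.
  intros Hj Hx. destruct (gder_expansion_exists j Hj) as [eta [Heta Eeta]].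
  apply continuous_ext_loc with (fun x => / 2 ^ (j + 2) * Fd (S j) x + eta x).
  - eapply filter_imp; [|apply locally_Iopen, Hx]. intros y Hy. symmetry. apply Eeta, Hy.
  - apply (continuous_plus (fun x => / 2 ^ (j + 2) * Fd (S j) x) eta);
      [|eapply Cbounded_continuous; eauto].
    apply (continuous_mult (fun _ => / 2 ^ (j + 2)) (Fd (S j))); [apply continuous_const|].
    apply (Fd_continuous k F Fd HF); [lia | exact Hx].
Qed.

Definition hmap (x : R) : R := graph_partial (chart1 phi) F nil x.
Definition amap (x : R) : R := graph_partial (chart2 phi) F nil x.

Lemma hmap_derive x : Iopen x -> is_derive hmap x (hslope x).
Proof.
  exact (graph_partial_derive N k U _ F Fd delta Hk (chart_first Hphi) HF nil x ltac:(simpl; lia)).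
Qed.

Lemma amap_derive x : Iopen x -> is_derive amap x (aslope x).
Proof.
  exact (graph_partial_derive N k U _ F Fd delta Hk (chart_second Hphi) HF nil x ltac:(simpl; lia)).
Qed.

Lemma hmap_0 : hmap 0 = 0.
Proof.
  unfold hmap, graph_partial, chart1. simpl. rewrite (Ck_unit_0 HF), (chart_origin Hphi).
  reflexivity.
Qed.

Lemma hmap_increment x y : Iopen x -> Iopen y ->
  Rabs (hmap y - hmap x - 2 * (y - x)) <= / 8 * Rabs (y - x).
Proof.
  intros Hx Hy. apply (increment_bound hmap hslope); intros s Hs;
    pose proof (Iopen_between x y s Hx Hy Hs) as Hs'.
  - apply hmap_derive, Hs'.
  - pose proof (hslope_bounds s Hs'). apply Rabs_le_between. lra.
Qed.

Lemma hmap_increasing x y : Iopen x -> Iopen y -> x <= y -> 15 / 8 * (y - x) <= hmap y - hmap x.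
Proof.
  intros Hx Hy Hxy. pose proof (hmap_increment x y Hx Hy) as H.
  rewrite (Rabs_pos_eq (y - x)) in H by lra. apply Rabs_le_between in H. lra.
Qed.

Lemma hmap_expanding x y : Iopen x -> Iopen y -> 15 / 8 * Rabs (y - x) <= Rabs (hmap y - hmap x).
Proof.
  intros Hx Hy. pose proof (hmap_increment x y Hx Hy) as H.
  pose proof (Rabs_triang_inv (2 * (y - x)) (- (hmap y - hmap x - 2 * (y - x)))).
  rewrite Rabs_Ropp in H0. rewrite Rabs_mult, (Rabs_pos_eq 2) in H0 by lra.
  replace (2 * (y - x) - - (hmap y - hmap x - 2 * (y - x))) with (hmap y - hmap x) in H0 by ring.
  lra.
Qed.

Definition hinv (y : R) : R := epsilon (inhabits 0) (fun x => Iopen x /\ hmap x = y).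

Lemma hinv_spec y : Rabs y < 3 / 2 -> Iopen (hinv y) /\ hmap (hinv y) = y.
Proof.
  intros Hy. unfold hinv. apply epsilon_spec. apply Rabs_def2 in Hy.
  assert (Hm : Iopen (- (9 / 10))) by (unfold Iopen; lra).
  assert (Hp : Iopen (9 / 10)) by (unfold Iopen; lra).
  pose proof (hmap_increasing _ 0 Hm Iopen_0 ltac:(lra)).
  pose proof (hmap_increasing 0 _ Iopen_0 Hp ltac:(lra)). rewrite hmap_0 in *.
  destruct (Ranalysis5.IVT_interv (fun x => hmap x - y) (- (9 / 10)) (9 / 10)) as [z [Hz Ez]];
    [| lra | simpl; lra | simpl; lra |].
  - intros a Ha. apply continuity_pt_filterlim.
    apply (is_derive_continuous (fun x => hmap x - y) a (hslope a + 0)).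
    apply (is_derive_Rplus hmap (fun _ => - y)); [|apply (is_derive_const (- y))].
    apply hmap_derive. unfold Iopen; lra.
  - exists z. split; [unfold Iopen; lra | simpl in Ez; lra].
Qed.

Lemma hinv_lipschitz y y' : Rabs y < 3 / 2 -> Rabs y' < 3 / 2 ->
  15 / 8 * Rabs (hinv y - hinv y') <= Rabs (y - y').
Proof.
  intros Hy Hy'. destruct (hinv_spec y Hy) as [J1 E1]. destruct (hinv_spec y' Hy') as [J2 E2].
  pose proof (hmap_expanding _ _ J2 J1). rewrite E1, E2 in H. exact H.
Qed.

Lemma hinv_derive y : Rabs y < 3 / 2 -> is_derive hinv y (inv_slope (hinv y)).
Proof.
  intros Hy. destruct (hinv_spec y Hy) as [Jy _]. pose proof (hslope_bounds _ Jy).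
  apply (is_derive_inverse hmap hinv y (hslope (hinv y)) (15 / 8)); [lra | lra | | |].
  - eapply filter_imp; [|apply locally_abs_lt, Hy]. intros z Hz. apply hinv_spec, Hz.
  - eapply filter_imp; [|apply locally_abs_lt, Hy]. intros z Hz. apply hinv_lipschitz; auto.
  - apply hmap_derive, Jy.
Qed.

Definition Gmap (y : R) : R := amap (hinv y).
Definition Gder (j : nat) (y : R) : R :=
  match j with O => Gmap y | S j' => gder j' (hinv y) end.

Lemma Gder_derive j y : (j < k)%nat -> Rabs y < 3 / 2 -> is_derive (Gder j) y (Gder (S j) y).
Proof.
  intros Hj Hy. destruct (hinv_spec y Hy) as [Jy _]. destruct j as [|j].
  - apply (is_derive_Rcomp amap hinv); [apply amap_derive, Jy | apply hinv_derive, Hy].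
  - apply (is_derive_Rcomp (gder j) hinv); [apply gder_derive; [lia | exact Jy]|].
    apply hinv_derive, Hy.
Qed.

Lemma Gder_continuous j y : (j <= k)%nat -> Rabs y < 3 / 2 -> continuous (Gder j) y.
Proof.
  intros Hj Hy. destruct (hinv_spec y Hy) as [Jy _]. destruct j as [|j].
  - eapply is_derive_continuous, Gder_derive; [lia | exact Hy].
  - apply (continuous_comp hinv (gder j)).
    + eapply is_derive_continuous, hinv_derive, Hy.
    + apply gder_continuous; [lia | exact Jy].
Qed.

Lemma Ck_Gmap : Ck_I k Gmap Gder.
Proof.
  split; [|split].
  - intros x _. reflexivity.
  - intros j Hj x Hx. apply is_deriv_I_of_is_derive, Gder_derive; [exact Hj | apply I11_abs_lt, Hx].
  - intros j Hj x Hx.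
    apply cont_I_of_continuous, Gder_continuous; [exact Hj | apply I11_abs_lt, Hx].
Qed.

Lemma Gder_bound M : (forall j x, (1 <= j <= k)%nat -> I11 x -> Rabs (Fd j x) <= M) ->
  forall j y, (1 <= j <= k)%nat -> I11 y -> Rabs (Gder j y) <= / 4 * M + Kder N N * delta.
Proof.
  intros HM j y Hj Hy. destruct (hinv_spec y (I11_abs_lt y Hy)) as [Jx _].
  destruct j as [|j]; [lia|].
  destruct (gder_expansion_exists j ltac:(lia)) as [eta [Heta Eeta]].
  simpl. rewrite Eeta by exact Jx. set (x := hinv y).
  eapply Rle_trans; [apply Rabs_triang|]. rewrite Rabs_mult.
  assert (A1 : Rabs (Fd (S j) x) <= M) by (apply HM; [lia | apply Iopen_I11, Jx]).
  assert (A2 : Rabs (eta x) <= Kder N j * delta) by (eapply Cbounded_bounded; eauto).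
  assert (A3 : Kder N j <= Kder N N) by (apply Kder_le; lia).
  pose proof (inv_pow2_le j). rewrite Rabs_pos_eq by lra. pose proof delta_pos.
  pose proof (Rabs_pos (Fd (S j) x)).
  assert (/ 2 ^ (j + 2) * Rabs (Fd (S j) x) <= / 4 * M) by (apply Rmult_le_compat; lra).
  nra.
Qed.

Lemma Gder_lipschitz M : lip = true ->
  (forall x x', I11 x -> I11 x' -> x <> x' -> Rabs (Fd k x - Fd k x') / Rabs (x - x') <= M) ->
  forall y y', I11 y -> I11 y' -> y <> y' ->
  Rabs (Gder k y - Gder k y') / Rabs (y - y') <= / 4 * M + Kder N N * delta.
Proof.
  intros Hlip HM y y' Hy Hy' Hyy. pose proof delta_pos.
  assert (HM0 : 0 <= M).
  { eapply Rle_trans; [|apply (HM 0 (1 / 2)); unfold I11; lra].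
    apply Rmult_le_pos; [apply Rabs_pos | left; apply Rinv_0_lt_compat, Rabs_pos_lt; lra]. }
  destruct (hinv_spec y (I11_abs_lt y Hy)) as [Jx _].
  destruct (hinv_spec y' (I11_abs_lt y' Hy')) as [Jx' _].
  destruct (gder_expansion_exists (k - 1) ltac:(lia)) as [eta [Heta Eeta]].
  replace (k - 1 - (k - 1))%nat with 0%nat in Heta by lia.
  destruct Heta as [_ [_ Hl]]. specialize (Hl Hlip).
  apply Rle_div_l; [apply Rabs_pos_lt; lra|].
  assert (Ek : k = S (k - 1)) by lia. rewrite Ek. cbn [Gder].
  rewrite !Eeta by assumption. replace (S (k - 1)) with k by lia.
  set (x := hinv y). set (x' := hinv y').
  assert (HX : 15 / 8 * Rabs (x - x') <= Rabs (y - y'))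
    by (apply hinv_lipschitz; apply I11_abs_lt; assumption).
  assert (HF1 : Rabs (Fd k x - Fd k x') <= M * Rabs (x - x')).
  { apply lipschitz_of_quotient; [|exact HM0]. apply HM; apply Iopen_I11; assumption. }
  assert (He : Rabs (eta x - eta x') <= Kder N (k - 1) * delta * Rabs (x - x'))
    by (apply Hl; assumption).
  replace (/ 2 ^ (k - 1 + 2) * Fd k x + eta x - (/ 2 ^ (k - 1 + 2) * Fd k x' + eta x'))
    with (/ 2 ^ (k - 1 + 2) * (Fd k x - Fd k x') + (eta x - eta x')) by ring.
  eapply Rle_trans; [apply Rabs_triang|]. rewrite Rabs_mult.
  pose proof (inv_pow2_le (k - 1)). rewrite Rabs_pos_eq by lra.
  pose proof (Rabs_pos (x - x')). pose proof (Kder_le N (k - 1) N ltac:(lia)).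
  pose proof (Kder_pos N (k - 1)).
  assert (/ 2 ^ (k - 1 + 2) * Rabs (Fd k x - Fd k x') <= / 4 * M * Rabs (x - x')).
  { pose proof (Rabs_pos (Fd k x - Fd k x')). rewrite Rmult_assoc. apply Rmult_le_compat; lra. }
  assert (Kder N (k - 1) * delta * Rabs (x - x') <= Kder N N * delta * Rabs (x - x')).
  { apply Rmult_le_compat_r; [lra|]. apply Rmult_le_compat_r; lra. }
  assert (0 <= Kder N N * delta) by nra.
  assert ((/ 4 * M + Kder N N * delta) * Rabs (x - x')
          <= (/ 4 * M + Kder N N * delta) * Rabs (y - y'))
    by (apply Rmult_le_compat_l; lra).
  lra.
Qed.

Lemma chart1_near_linear p : Binf1 p -> Rabs (chart1 phi p - 2 * fst p) <= 4 * delta.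
Proof.
  destruct p as [p1 p2]. intros [Hp1 Hp2]. simpl in *. pose proof delta_pos.
  assert (R0 : Rabs 0 <= 1) by (rewrite Rabs_R0; lra).
  assert (E : forall b q, Binf1 q ->
            Rabs (pdw (b :: nil) (chart1 phi) q - pdw (b :: nil) (chart1 phi) (0, 0)) <= 2 * delta).
  { intros b q Hq. apply (first_partial_near_origin N k U _ delta Hk (chart_first Hphi));
      [reflexivity | exact Hq]. }
  assert (A1 := partial_increment1 N U _ delta (chart_first Hphi) nil 2 (2 * delta) 0 p1 p2
                  ltac:(simpl; lia) R0 Hp1 Hp2).
  assert (A2 := partial_increment2 N U _ delta (chart_first Hphi) nil 0 (2 * delta) 0 p2 0
                  ltac:(simpl; lia) R0 Hp2 R0).
  simpl in A1, A2. rewrite !Rminus_0_r in A1, A2.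
  specialize (A1 ltac:(intros s Hs; pose proof (E false (s, p2) (conj Hs Hp2)) as Es;
                       cbn [pdw] in Es; rewrite (chart_d11 Hphi) in Es; exact Es)).
  specialize (A2 ltac:(intros s Hs; pose proof (E true (0, s) (conj R0 Hs)) as Es;
                       cbn [pdw] in Es; rewrite (chart_d12 Hphi) in Es; exact Es)).
  assert (G0 : chart1 phi (0, 0) = 0) by (unfold chart1; rewrite (chart_origin Hphi); reflexivity).
  replace (chart1 phi (p1, p2) - 2 * p1)
    with ((chart1 phi (p1, p2) - chart1 phi (0, p2) - 2 * p1)
          + (chart1 phi (0, p2) - chart1 phi (0, 0) - 0 * p2)) by (rewrite G0; ring).
  eapply Rle_trans; [apply Rabs_triang|].
  pose proof (Rabs_pos p1). pose proof (Rabs_pos p2). nra.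
Qed.

Lemma graph_point_interior x1 : Rabs x1 <= 1 -> Rabs (hmap x1) <= 1 -> Iopen x1.
Proof.
  intros H1 H2. destruct (Rlt_dec (Rabs x1) 1) as [H|H].
  { apply Rabs_def2 in H. unfold Iopen; lra. }
  exfalso. assert (Hx1 : Rabs x1 = 1) by lra.
  assert (Hb : Binf1 (x1, F x1)).
  { split; simpl; [lra|]. apply (F_bounded k F Fd ltac:(lia) HF), Rabs_le_between, H1. }
  pose proof (chart1_near_linear _ Hb) as H3. simpl in H3.
  assert (delta <= / 16) by (eapply Rle_trans; [exact (chart_small Hphi) | apply Rmin_l]).
  pose proof (Rabs_triang_inv (2 * x1) (chart1 phi (x1, F x1))).
  rewrite Rabs_mult, Hx1, Rabs_pos_eq in H4 by lra.
  rewrite <- Rabs_Ropp, Ropp_minus_distr in H3. fold (hmap x1) in *.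
  change (chart1 phi (x1, F x1)) with (hmap x1) in *. lra.
Qed.

Lemma graph_transform_Gmap : graph_transform phi F Gmap.
Proof.
  intros [y1 y2]. simpl. split.
  - intros [Hy1 [x1 [Hx1 Ephi]]]. split; [exact Hy1|].
    assert (Eh : hmap x1 = y1)
      by (unfold hmap, graph_partial, chart1; simpl; rewrite Ephi; reflexivity).
    assert (Jx1 : Iopen x1) by (apply graph_point_interior; [|rewrite Eh]; assumption).
    destruct (hinv_spec y1 ltac:(lra)) as [JX EX].
    assert (EXx : hinv y1 = x1).
    { pose proof (hmap_expanding _ _ Jx1 JX). rewrite EX, Eh, Rminus_diag, Rabs_R0 in H.
      pose proof (Rabs_pos (hinv y1 - x1)).
      assert (Rabs (hinv y1 - x1) = 0) by lra. apply Rabs_eq_0 in H1. lra. }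
    unfold Gmap, amap, graph_partial, chart2. simpl. rewrite EXx, Ephi. reflexivity.
  - intros [Hy1 Hy2]. split; [exact Hy1|].
    destruct (hinv_spec y1 ltac:(lra)) as [JX EX].
    exists (hinv y1). split; [left; apply Iopen_abs, JX|].
    rewrite (surjective_pairing (phi (hinv y1, F (hinv y1)))).
    unfold hmap, graph_partial, chart1 in EX. simpl in EX. rewrite EX, Hy2. reflexivity.
Qed.

Lemma graph_transform_unique G' : graph_transform phi F G' -> forall x, I11 x -> G' x = Gmap x.
Proof.
  intros HG x Hx. assert (Hax : Rabs x <= 1) by (apply Rabs_le, Hx).
  destruct (proj2 (graph_transform_Gmap (x, Gmap x)) (conj Hax eq_refl)) as [_ Hex].
  destruct (proj1 (HG (x, Gmap x)) (conj Hax Hex)) as [_ E].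
  symmetry. exact E.
Qed.

End Graph_transform.

Lemma Lub_Rbar_le_of_ub (E : R -> Prop) (b : R) :
  (forall y, E y -> y <= b) -> Rbar_le (Lub_Rbar E) b.
Proof. intros H. apply (proj2 (Lub_Rbar_correct E)). exact H. Qed.

Lemma Lub_Rbar_finite (E : R -> Prop) e (b : R) : E e -> Rbar_le (Lub_Rbar E) b ->
  exists M, Lub_Rbar E = Finite M /\ (forall y, E y -> y <= M) /\ M <= b.
Proof.
  intros He Hl. destruct (Lub_Rbar_correct E) as [Hub _].
  destruct (Lub_Rbar E) as [r| |].
  - exists r. split; [reflexivity|]. split; [exact Hub | exact Hl].
  - contradiction.
  - exact (False_ind _ (Hub e He)).
Qed.

Lemma Ck_norm_finite k Fd : (1 <= k)%nat -> Rbar_le (Ck_norm k Fd) 1 ->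
  exists M, Ck_norm k Fd = Finite M /\ M <= 1 /\
    forall j x, (1 <= j <= k)%nat -> I11 x -> Rabs (Fd j x) <= M.
Proof.
  intros Hk Hn. unfold Ck_norm in *.
  assert (He : exists j x, (1 <= j <= k)%nat /\ I11 x /\ Rabs (Fd 1%nat 0) = Rabs (Fd j x)).
  { exists 1%nat, 0. split; [lia|]. split; [unfold I11; lra | reflexivity]. }
  destruct (Lub_Rbar_finite _ _ 1 He Hn) as [M [EM [HM HM1]]].
  exists M. split; [exact EM|]. split; [exact HM1|].
  intros j x Hj Hx. apply HM. exists j, x. auto.
Qed.

Lemma Ck_norm_Gder N k U phi delta F Fd : (1 <= k <= N)%nat -> hyperbolic_chart N U phi delta ->
  Ck_unit k F Fd -> Rbar_le (Ck_norm k Fd) 1 ->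
  Rbar_le (Ck_norm k (Gder phi F Fd))
    (Rbar_plus (Rbar_mult (/ 4) (Ck_norm k Fd)) (Kder N N * delta)).
Proof.
  intros Hk Hphi HF Hn. destruct (Ck_norm_finite k Fd ltac:(lia) Hn) as [M [EM [_ HM]]].
  rewrite EM. apply Lub_Rbar_le_of_ub. intros y [j [x [Hj [Hx ->]]]].
  apply (Gder_bound N k U phi delta F Fd false Hk Hphi HF ltac:(discriminate) M HM j x Hj Hx).
Qed.

Lemma Ck1_norm_Gder N k U phi delta F Fd : (1 <= k <= N)%nat -> hyperbolic_chart N U phi delta ->
  Ck_unit k F Fd -> Rbar_le (Ck1_norm k Fd) 1 ->
  Rbar_le (Ck1_norm k (Gder phi F Fd))
    (Rbar_plus (Rbar_mult (/ 4) (Ck1_norm k Fd)) (Kder N N * delta)).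
Proof.
  intros Hk Hphi HF Hn.
  unfold Ck1_norm in *.
  assert (He : exists j x, (1 <= j <= k)%nat /\ I11 x /\ Rabs (Fd 1%nat 0) = Rabs (Fd j x)).
  { exists 1%nat, 0. split; [lia|]. split; [unfold I11; lra | reflexivity]. }
  destruct (Lub_Rbar_finite _ _ 1 (or_introl He) Hn) as [M [EM [HM HM1]]].
  assert (HFM : forall j x, (1 <= j <= k)%nat -> I11 x -> Rabs (Fd j x) <= M)
    by (intros j x Hj Hx; apply HM; left; exists j, x; auto).
  assert (HQ : forall x x', I11 x -> I11 x' -> x <> x' ->
                 Rabs (Fd k x - Fd k x') / Rabs (x - x') <= M)
    by (intros x x' Hx Hx' Hne; apply HM; right; exists x, x'; auto).
  assert (HL : true = true -> lipschitz_on 1 (Fd k)).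
  { intros _ x y Hx Hy. apply lipschitz_of_quotient; [|lra].
    intros Hne. eapply Rle_trans; [apply HQ; auto using Iopen_I11 | exact HM1]. }
  rewrite EM. apply Lub_Rbar_le_of_ub.
  intros y [[j [x [Hj [Hx ->]]]] | [x [x' [Hx [Hx' [Hne ->]]]]]].
  - apply (Gder_bound N k U phi delta F Fd true Hk Hphi HF HL M HFM j x Hj Hx).
  - apply (Gder_lipschitz N k U phi delta F Fd true Hk Hphi HF HL M eq_refl HQ x x' Hx Hx' Hne).
Qed.

Theorem lemma2p4 :
  forall N : nat, (1 <= N)%nat ->
  exists delta0 C : R, 0 < delta0 /\ 0 < C /\
  forall (U V : R * R -> Prop) (phi : R * R -> R * R) (delta : R),
    open U -> open V ->
    (forall p, Binf1 p -> U p /\ V p) ->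
    Cm_diffeo_onto_image (S N) U V phi ->
    phi (0, 0) = (0, 0) ->
    pd1 (fun p => fst (phi p)) (0, 0) = 2 ->
    pd2 (fun p => fst (phi p)) (0, 0) = 0 ->
    pd1 (fun p => snd (phi p)) (0, 0) = 0 ->
    pd2 (fun p => snd (phi p)) (0, 0) = 1 / 2 ->
    (forall w : list bool, (2 <= length w <= S N)%nat -> forall p, U p ->
       Rabs (pdw w (fun q => fst (phi q)) p) <= delta /\
       Rabs (pdw w (fun q => snd (phi q)) p) <= delta) ->
    0 < delta -> delta <= delta0 ->
    forall (k : nat), (1 <= k <= N)%nat ->
    forall (F : R -> R) (Fd : nat -> R -> R),
      Ck_I k F Fd -> F 0 = 0 -> Rbar_le (Ck_norm k Fd) 1 ->
      exists G : R -> R,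
        graph_transform phi F G /\
        (forall G' : R -> R, graph_transform phi F G' ->
           forall x, I11 x -> G' x = G x) /\
        exists Gd : nat -> R -> R,
          Ck_I k G Gd /\
          Rbar_le (Ck_norm k Gd)
            (Rbar_plus (Rbar_mult (/ 4) (Ck_norm k Fd)) (C * delta)) /\
          (Rbar_le (Ck1_norm k Fd) 1 ->
           Rbar_le (Ck1_norm k Gd)
             (Rbar_plus (Rbar_mult (/ 4) (Ck1_norm k Fd)) (C * delta))).
Proof.
  intros N _. exists (delta0 N), (Kder N N).
  split; [apply delta0_pos | split; [apply Kder_pos|]].
  intros U V phi delta _ _ HUV [_ [[HC1 HC2] _]] H0 H11 H12 H21 H22 Hbd Hdel Hdel0
    k Hk F Fd HF HF0 Hn.
  assert (HU : forall p, Binf1 p -> U p) by (intros p Hp; apply HUV, Hp).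
  assert (Hphi : hyperbolic_chart N U phi delta).
  { split; try assumption; split; try assumption; intros w Hw p Hp; apply Hbd; assumption. }
  destruct (Ck_norm_finite k Fd ltac:(lia) Hn) as [M [_ [HM1 HM]]].
  assert (HFu : Ck_unit k F Fd).
  { split; [exact HF | exact HF0|]. intros j x Hj Hx. pose proof (HM j x Hj Hx). lra. }
  assert (HL : false = true -> lipschitz_on 1 (Fd k)) by discriminate.
  exists (Gmap phi F).
  split; [exact (graph_transform_Gmap N k U phi delta F Fd false Hk Hphi HFu HL)|].
  split; [exact (graph_transform_unique N k U phi delta F Fd false Hk Hphi HFu HL)|].
  exists (Gder phi F Fd). split; [exact (Ck_Gmap N k U phi delta F Fd false Hk Hphi HFu HL)|].
  split; [apply (Ck_norm_Gder N k U phi) | apply (Ck1_norm_Gder N k U phi)]; assumption.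
Qed.
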